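(* Let $R$ be a principal ideal domain and let $\mathcal A$ be the category of finitely generated $R$-modules. Then the thick subcategories, the wide subcategories and the Serre subcategories of $\mathcal A$ coincide: they are exactly $\mathcal A$ itself and, for each subset $S$ of the maximal primes of $R$, the full subcategory of finitely generated $S$-torsion modules. These subcategories are in bijection with the specialisation closed subsets of $\mathrm{Spec}(R)$.
   Context: A full additive subcategory $\mathcal C$ of $\mathcal A$ is triangulated if whenever two of the three terms of a short exact sequence in $\mathcal A$ belong to $\mathcal C$, so does the third; it is thick if it is triangulated and closed under direct summands. A wide subcategory is a full subcategory that is abelian (closed under kernels and cokernels) and closed under extensions; a Serre subcategory is a wide subcategory closed under submodules and quotient modules. A finitely generated module is $S$-torsion if it is torsion and its $p$-primary component (elements annihilated by a power of $p$) is zero for every prime $p\notin S$. A subset of $\mathrm{Spec}(R)$ is specialisation closed if it is a union of Zariski-closed subsets. *)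

From HB Require Import structures.
From mathcomp Require Import all_boot all_order all_algebra.
Set Implicit Arguments. Unset Strict Implicit. Unset Printing Implicit Defensive.
Import GRing.Theory.
Local Open Scope ring_scope.

Section Defs.
Variable R : idomainType.

Definition dvd (a b : R) : Prop := exists c, b = c * a.

Definition is_ideal (I : R -> Prop) : Prop :=
  I 0 /\ (forall x y, I x -> I y -> I (x + y)) /\ (forall r x, I x -> I (r * x)).

Definition is_PID : Prop :=
  forall I, is_ideal I -> exists a, forall x, I x <-> dvd a x.

Definition is_prime_ideal (P : R -> Prop) : Prop :=
  is_ideal P /\ ~ P 1 /\ (forall a b, P (a * b) -> P a \/ P b).

Definition is_maximal_ideal (P : R -> Prop) : Prop :=
  is_ideal P /\ ~ P 1 /\
  (forall J, is_ideal J -> (forall x, P x -> J x) -> (forall x, J x -> P x) \/ J 1).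

Definition is_prime_elt (p : R) : Prop :=
  p != 0 /\ ~ (p \is a GRing.unit) /\ (forall a b, dvd p (a * b) -> dvd p a \/ dvd p b).

(* subsets of Spec R are predicates on (prime) ideals, compared extensionally *)
Definition Vset (I : R -> Prop) (P : R -> Prop) : Prop :=
  is_prime_ideal P /\ forall x, I x -> P x.

(* T is a union of Zariski-closed subsets V(I) of Spec R *)
Definition spec_closed (T : (R -> Prop) -> Prop) : Prop :=
  (forall P, T P -> is_prime_ideal P) /\
  (forall P, T P -> exists I, is_ideal I /\ Vset I P /\ (forall Q, Vset I Q -> T Q)).

Definition same_specset (T1 T2 : (R -> Prop) -> Prop) : Prop :=
  forall P, is_prime_ideal P -> (T1 P <-> T2 P).

Definition lin (M N : lmodType R) (f : M -> N) : Prop :=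
  forall (a : R) (x y : M), f (a *: x + y) = a *: f x + f y.

Definition fin_gen (M : lmodType R) : Prop :=
  exists n (v : 'I_n -> M), forall m : M, exists a : 'I_n -> R, m = \sum_(i < n) a i *: v i.

Definition iso (M N : lmodType R) : Prop :=
  exists f : M -> N, lin f /\ bijective f.

(* a subcategory (of all modules) given by its class of objects *)
Definition subcat := lmodType R -> Prop.

Definition same_subcat (C D : subcat) : Prop := forall M, C M <-> D M.

Definition fgA : subcat := fun M => fin_gen M.

Definition full_additive (C : subcat) : Prop :=
  (forall M, C M -> fin_gen M) /\
  (forall M N : lmodType R, iso M N -> C M -> C N) /\
  (forall M : lmodType R, (forall x : M, x = 0) -> C M) /\
  (forall M N : lmodType R, C M -> C N -> C (M * N)%type).

Definition ses (M1 M2 M3 : lmodType R) (f : M1 -> M2) (g : M2 -> M3) : Prop :=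
  fin_gen M1 /\ fin_gen M2 /\ fin_gen M3 /\
  lin f /\ lin g /\ injective f /\ (forall z, exists y, g y = z) /\
  (forall y, g y = 0 <-> exists x, y = f x).

Definition two_of_three (C : subcat) : Prop :=
  forall (M1 M2 M3 : lmodType R) (f : M1 -> M2) (g : M2 -> M3), ses f g ->
    ((C M1 -> C M2 -> C M3) /\ (C M1 -> C M3 -> C M2) /\ (C M2 -> C M3 -> C M1)).

Definition triangulated (C : subcat) : Prop := full_additive C /\ two_of_three C.

Definition thick (C : subcat) : Prop :=
  triangulated C /\ (forall M N : lmodType R, C (M * N)%type -> C M).

Definition is_kernel (M N K : lmodType R) (f : M -> N) (k : K -> M) : Prop :=
  lin k /\ injective k /\ (forall x, f x = 0 <-> exists z, x = k z).
Definition is_cokernel (M N Q : lmodType R) (f : M -> N) (q : N -> Q) : Prop :=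
  lin q /\ (forall z, exists y, q y = z) /\ (forall y, q y = 0 <-> exists x, y = f x).

Definition wide (C : subcat) : Prop :=
  full_additive C /\
  (forall (M N K : lmodType R) (f : M -> N) (k : K -> M),
      C M -> C N -> lin f -> is_kernel f k -> C K) /\
  (forall (M N Q : lmodType R) (f : M -> N) (q : N -> Q),
      C M -> C N -> lin f -> is_cokernel f q -> C Q) /\
  (forall (M1 M2 M3 : lmodType R) (f : M1 -> M2) (g : M2 -> M3),
      ses f g -> C M1 -> C M3 -> C M2).

Definition serre (C : subcat) : Prop :=
  wide C /\
  (forall (N M : lmodType R) (i : N -> M), lin i -> injective i -> C M -> C N) /\
  (forall (M N : lmodType R) (q : M -> N), lin q -> (forall z, exists y, q y = z) -> C M -> C N).

Definition torsion (M : lmodType R) : Prop :=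
  forall m : M, exists r : R, r != 0 /\ r *: m = 0.

Definition in_S (S : (R -> Prop) -> Prop) (p : R) : Prop :=
  exists P, S P /\ forall x, P x <-> dvd p x.

Definition S_torsion (S : (R -> Prop) -> Prop) : subcat := fun M =>
  fin_gen M /\ torsion M /\
  forall p, is_prime_elt p -> ~ in_S S p ->
    forall m : M, (exists n : nat, p ^+ n *: m = 0) -> m = 0.

End Defs.

(* Over a PID every finitely generated module is an iterated extension of
   cyclic modules R/(c), so a thick subcategory C is governed by the cyclic
   modules it contains.  If some M in C is not torsion, a nonzero functional
   on M has image (c) with c != 0, so R is a direct summand of M; then every
   R/(c) lies in C, as the cokernel of multiplication by c on R, and C is all
   of A.  Otherwise C consists of torsion modules.  If some M in C has nonzero
   p-torsion, its p-primary part splits off, and from it a summand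
   R/(p^(j+1)); the extension 0 -> R/(p^(j+1)) -> R/(p) x R/(p^(2j+1)) ->
   R/(p^(j+1)) -> 0 then puts R/(p) in C.  Conversely, once R/(p) is in C for
   the primes p of S, induction along the factorisation of c puts every
   S-torsion R/(c) in C.  So C is A or the S-torsion modules for
   S = {(p) | R/(p) in C}; both classes are Serre.  Sending A to Spec(R) =
   V(0) and the S-torsion modules to S matches them with the specialisation
   closed subsets, as those not containing (0) consist of maximal ideals. *)

From HB Require Import structures.
From mathcomp Require Import all_boot all_order all_algebra.
From mathcomp Require Import boolp.
From mathcomp Require Import ring.
Set Implicit Arguments. Unset Strict Implicit. Unset Printing Implicit Defensive.
Import GRing.Theory.
Local Open Scope ring_scope.

Lemma not_Acc_descending (T : Type) (rel : T -> T -> Prop) (c : T) :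
  ~ Acc rel c -> exists s : nat -> T, forall n, rel (s n.+1) (s n).
Proof.
move=> nAc.
have step x : ~ Acc rel x -> exists y, rel y x /\ ~ Acc rel y.
  move=> nAx; apply: contrapT => nstep; apply: nAx; constructor => y rel_yx.
  by apply: contrapT => nAy; apply: nstep; exists y.
have next (w : {z | ~ Acc rel z}) : {w' : {z | ~ Acc rel z} | rel (sval w') (sval w)}.
  by have [y [rel_yx nAy]] := cid (step _ (svalP w)); exists (exist _ y nAy).
exists (fun n => sval (iter n (fun w => sval (next w)) (exist _ c nAc))) => n.
by rewrite iterS; exact: (svalP (next _)).
Qed.

Section Divisibility.
Variable R : idomainType.
Implicit Types a b c d e p r s u v x y : R.

Lemma dvd_refl a : dvd a a. Proof. by exists 1; rewrite mul1r. Qed.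
Lemma dvd0 a : dvd a 0. Proof. by exists 0; rewrite mul0r. Qed.
Lemma dvd_trans a b c : dvd a b -> dvd b c -> dvd a c.
Proof. by move=> [k ->] [l ->]; exists (l * k); rewrite mulrA. Qed.
Lemma dvd_mull a b c : dvd a b -> dvd a (c * b).
Proof. by move=> [k ->]; exists (c * k); rewrite mulrA. Qed.
Lemma dvd_mul_l a b : dvd a (b * a). Proof. by exists b. Qed.
Lemma dvd_mul_r a b : dvd a (a * b). Proof. by exists b; rewrite mulrC. Qed.
Lemma dvdD a b c : dvd a b -> dvd a c -> dvd a (b + c).
Proof. by move=> [k ->] [l ->]; exists (k + l); rewrite mulrDl. Qed.
Lemma dvdN a b : dvd a b -> dvd a (- b).
Proof. by move=> [k ->]; exists (- k); rewrite mulNr. Qed.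
Lemma dvdB a b c : dvd a b -> dvd a c -> dvd a (b - c).
Proof. by move=> h1 h2; apply: dvdD => //; apply: dvdN. Qed.
Lemma dvd1_unit a : dvd a 1 <-> a \is a GRing.unit.
Proof.
split=> [[k e]|h]; first by apply/unitrP; exists k; split=> //; rewrite mulrC.
by exists a^-1; rewrite mulVr.
Qed.
Lemma unit_dvd a b : a \is a GRing.unit -> dvd a b.
Proof. by move=> /dvd1_unit h; apply: (dvd_trans h); exists b; rewrite mulr1. Qed.
Lemma dvd_mul2r a b c : c != 0 -> dvd (a * c) (b * c) -> dvd a b.
Proof. by move=> c0 [k]; rewrite mulrA => /(mulIf c0) ->; apply: dvd_mul_l. Qed.
Lemma dvd_mul2l a b c : c != 0 -> dvd (c * a) (c * b) -> dvd a b.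
Proof. by move=> c0; rewrite ![c * _]mulrC; apply: dvd_mul2r. Qed.
Lemma dvd_mulr2 a b c : dvd a b -> dvd (a * c) (b * c).
Proof. by move=> [k ->]; exists k; rewrite mulrA. Qed.

Lemma dvd_ideal a : is_ideal (dvd a).
Proof.
split; first exact: dvd0.
by split=> [x y|r x]; [apply: dvdD | apply: dvd_mull].
Qed.

Lemma zero_ideal : is_ideal (fun x : R => x = 0).
Proof. by split=> //; split=> [x y -> ->|r x ->]; rewrite ?addr0 ?mulr0. Qed.

Lemma zero_prime_ideal : is_prime_ideal (fun x : R => x = 0).
Proof.
split; first exact: zero_ideal.
split; first by move/eqP; rewrite oner_eq0.
by move=> a b /eqP; rewrite mulf_eq0 => /orP [] /eqP; [left|right].
Qed.

Lemma prime_elt_ideal p : is_prime_elt p -> is_prime_ideal (dvd p).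
Proof.
move=> [p0 [pu pp]]; split; first exact: dvd_ideal.
by split; [move/dvd1_unit|].
Qed.

Definition coprimer a b := exists u v, u * a + v * b = 1.

Lemma coprimer_sym a b : coprimer a b -> coprimer b a.
Proof. by move=> [u [v e]]; exists v, u; rewrite addrC. Qed.

Lemma coprimer_dvd a b c : coprimer a b -> dvd a (b * c) -> dvd a c.
Proof.
move=> [u [v e]] h; have -> : c = (c * u) * a + v * (b * c).
  by rewrite -[c in LHS]mulr1 -e; ring.
by apply: dvdD; [apply: dvd_mul_l | apply: dvd_mull].
Qed.

Lemma coprimer_mull a b s : coprimer a s -> coprimer b s -> coprimer (a * b) s.
Proof.
move=> [u [v e]] [u' [v' e']]; exists (u * u'), (u * a * v' + v * (u' * b + v' * s)).
rewrite -[1]mulr1 -{1}e -e'; ring.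
Qed.

Lemma coprimer_expl a s n : coprimer a s -> coprimer (a ^+ n) s.
Proof.
move=> h; elim: n => [|n IH]; last by rewrite exprS; apply: coprimer_mull.
by rewrite expr0; exists 1, 0; rewrite mul0r addr0 mulr1.
Qed.

Lemma coprimer_scale_eq0 (M : lmodType R) (z : M) a b :
  coprimer a b -> a *: z = 0 -> b *: z = 0 -> z = 0.
Proof.
move=> [u [v e]] az bz.
by rewrite -[z]scale1r -e scalerDl -!scalerA az bz !scaler0 addr0.
Qed.

Definition proper_dvd a b := b != 0 /\ dvd a b /\ ~ dvd b a.

Definition irreducible_elt c := c != 0 /\ ~ c \is a GRing.unit /\
  forall d e, c = d * e -> d \is a GRing.unit \/ e \is a GRing.unit.

Section PID.
Hypothesis hR : is_PID R.

Lemma bezout a b : exists g u v, dvd g a /\ dvd g b /\ g = u * a + v * b.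
Proof.
pose I x := exists u v, x = u * a + v * b.
have I_ideal : is_ideal I.
  split; first by exists 0, 0; rewrite !mul0r addr0.
  split=> [x y [u [v ->]] [u' [v' ->]]|r x [u [v ->]]].
    by exists (u + u'), (v + v'); rewrite !mulrDl addrACA.
  by exists (r * u), (r * v); rewrite mulrDr !mulrA.
have [g hg] := hR I_ideal.
have [u [v eg]] : I g by apply/hg/dvd_refl.
exists g, u, v; split; last split=> //.
  by apply/hg; exists 1, 0; rewrite mul1r mul0r addr0.
by apply/hg; exists 0, 1; rewrite mul1r mul0r add0r.
Qed.

(* The ideal generated by a descending divisor chain is principal, and its
   generator already occurs in the chain. *)
Lemma proper_dvd_wf : well_founded proper_dvd.
Proof.
move=> c; apply: contrapT => nAc; have [s sS] := not_Acc_descending nAc.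
have sD n k : dvd (s (n + k)%N) (s n).
  elim: k => [|k IH]; first by rewrite addn0; apply: dvd_refl.
  by rewrite addnS; apply: dvd_trans IH; case: (sS (n + k)%N) => _ [].
pose I x := exists n, dvd (s n) x.
have I_ideal : is_ideal I.
  split; first by exists 0%N; apply: dvd0.
  split=> [x y [n hn] [m hm]|r x [n hn]]; last by exists n; apply: dvd_mull.
  exists (n + m)%N; apply: dvdD; first by apply: dvd_trans hn; apply: sD.
  by rewrite addnC; apply: dvd_trans hm; apply: sD.
have [a ha] := hR I_ideal.
have [N hN] : I a by apply/ha/dvd_refl.
have a_sN1 : dvd a (s N.+1) by apply/ha; exists N.+1; apply: dvd_refl.
by case: (sS N) => _ [_]; apply; apply: dvd_trans a_sN1.
Qed.

Lemma irreducible_prime c : irreducible_elt c -> is_prime_elt c.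
Proof.
move=> [c0 [cu ci]]; split=> //; split=> // a b hab.
have [g [u [v [gc [ga eg]]]]] := bezout c a.
case: gc => h ech; case: (ci h g ech) => hu.
  by left; apply: dvd_trans ga; exists h^-1; rewrite ech mulrA mulVr ?mul1r.
right.
have c_bg : dvd c (b * g).
  rewrite eg mulrDr; apply: dvdD; first by exists (b * u); ring.
  have -> : b * (v * a) = v * (a * b) by ring.
  by apply: dvd_mull.
have : dvd c (b * g * g^-1) by rewrite mulrC; apply: dvd_mull.
by rewrite -mulrA mulrV // mulr1.
Qed.

Lemma prime_coprimer p s : is_prime_elt p -> ~ dvd p s -> coprimer p s.
Proof.
move=> [p0 [pu pp]] nps.
have [g [u [v [gp [gs eg]]]]] := bezout p s.
case: (gp) => e ep.
case: (pp e g); first by rewrite -ep; apply: dvd_refl.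
  move=> [f ef]; have e1 : 1 = f * g.
    by apply: (mulIf p0); rewrite mul1r {1}ep ef; ring.
  by exists (f * u), (f * v); rewrite e1 eg; ring.
by move=> pg; exfalso; apply: nps; apply: dvd_trans gs.
Qed.

Lemma prime_dvd_expr p q n : is_prime_elt p -> dvd p (q ^+ n) -> dvd p q.
Proof.
move=> hp; elim: n => [|n IH]; first by rewrite expr0 => /dvd1_unit; case: hp => _ [].
by rewrite exprS; case: hp => _ [_ pp] /pp [//|/IH].
Qed.

Lemma prime_dvd_prime p q : is_prime_elt p -> is_prime_elt q -> dvd p q -> dvd q p.
Proof.
move=> [_ [pu _]] [q0 [_ qp]] [k ek].
case: (qp k p); [by rewrite -ek; apply: dvd_refl| |by []].
move=> [l el]; exfalso; apply: pu; apply/dvd1_unit; exists l; apply: (mulIf q0).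
by rewrite mul1r {1}ek el; ring.
Qed.

Lemma dvd_prime_exprS p i g : is_prime_elt p ->
  dvd g (p ^+ i.+1) -> dvd (p ^+ i.+1) g \/ dvd g (p ^+ i).
Proof.
move=> hp; have [p0 _] := hp.
have coprime_case g' j : ~ dvd p g' -> dvd g' (p ^+ j.+1) -> dvd g' (p ^+ j).
  move=> npg h; apply: (coprimer_dvd (b := p)); last by rewrite -exprS.
  exact/coprimer_sym/prime_coprimer.
elim: i g => [|i IH] g h.
  case: (lem (dvd p g)) => [pg|npg]; first by left; rewrite expr1.
  by right; apply: coprime_case.
case: (lem (dvd p g)) => [[g' eg]|npg]; last by right; apply: coprime_case.
move: h; rewrite eg [p ^+ _.+2]exprSr => /(dvd_mul2r p0) /IH [h|h].
  by left; apply: dvd_mulr2.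
by right; rewrite exprSr; apply: dvd_mulr2.
Qed.

Lemma prime_power_factor p r : ~ p \is a GRing.unit -> p != 0 -> r != 0 ->
  exists k s, r = p ^+ k * s /\ ~ dvd p s.
Proof.
move=> pu p0; elim/(well_founded_ind proper_dvd_wf): r => r IH r0.
case: (lem (dvd p r)) => [[r' er]|npr]; last by exists 0%N, r; rewrite expr0 mul1r.
have r'0 : r' != 0 by apply: contraNneq r0 => e; rewrite er e mul0r.
have [|//|k [s [es ns]]] := IH r'.
  split=> //; split; first by rewrite er; apply: dvd_mul_r.
  move=> [t et]; apply: pu; apply/dvd1_unit; exists t.
  by apply: (mulIf r'0); rewrite mul1r {1}et er; ring.
by exists k.+1, s; split=> //; rewrite er es exprSr; ring.
Qed.

Lemma prime_elt_maximal p : is_prime_elt p -> is_maximal_ideal (dvd p).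
Proof.
move=> [p0 [pu pp]]; split; first exact: dvd_ideal.
split; first by move/dvd1_unit.
move=> J hJ sJ; have [d hd] := hR hJ.
have [e ep] : dvd d p by apply/hd/sJ/dvd_refl.
case: (pp e d); first by rewrite -ep; apply: dvd_refl.
  move=> [f ef]; right; apply/hd; exists f.
  by apply: (mulIf p0); rewrite mul1r {1}ep ef; ring.
by move=> pd; left => x /hd dx; apply: dvd_trans dx.
Qed.

Lemma prime_idealP P : is_prime_ideal P ->
  (forall x, P x <-> x = 0) \/ exists p, is_prime_elt p /\ forall x, P x <-> dvd p x.
Proof.
move=> [hI [n1 pr]]; have [a ha] := hR hI.
case: (eqVneq a 0) => [a0|a0].
  left=> x; rewrite ha a0; split=> [[k ->]|->]; rewrite ?mulr0 //; exact: dvd0.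
right; exists a; split=> //; split=> //; split.
  by move/dvd1_unit => h; apply: n1; apply/ha.
by move=> x y /ha/pr [] /ha; [left|right].
Qed.

End PID.
End Divisibility.

Section Submodules.
Variable R : idomainType.

Record submod (M : lmodType R) := SubMod {
  sm :> M -> Prop;
  sm0 : sm 0;
  smD : forall x y, sm x -> sm y -> sm (x + y);
  smZ : forall (a : R) x, sm x -> sm (a *: x) }.

Section SubmodTheory.
Variables (M : lmodType R) (S : submod M).
Implicit Types x y z : M.

Lemma smN x : S x -> S (- x).
Proof. by move=> h; rewrite -scaleN1r; exact: smZ. Qed.

Lemma smB x y : S x -> S y -> S (x - y).
Proof. by move=> h1 h2; apply: smD => //; apply: smN. Qed.

Lemma sm_congr_sym x y : S (x - y) -> S (y - x).
Proof. by rewrite -opprB => /smN; rewrite opprK. Qed.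

Lemma sm_congr_trans y x z : S (x - y) -> S (y - z) -> S (x - z).
Proof. by move=> h1 h2; rewrite -[x](subrK y) -addrA; apply: smD. Qed.

Definition subm := {x : M | S x}.
HB.instance Definition _ := gen_eqMixin subm.
HB.instance Definition _ := gen_choiceMixin subm.

Lemma subm_inj (u v : subm) : sval u = sval v -> u = v.
Proof. case: u v => [x px] [y py] /= e; subst; congr exist; exact: Prop_irrelevance. Qed.

Definition subm0 : subm := exist _ 0 (sm0 S).
Definition subm_opp (u : subm) : subm := exist _ (- sval u) (smN (svalP u)).
Definition subm_add (u v : subm) : subm := exist _ (sval u + sval v) (smD (svalP u) (svalP v)).
Definition subm_scale (a : R) (u : subm) : subm := exist _ (a *: sval u) (smZ a (svalP u)).

Lemma subm_addA : associative subm_add.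
Proof. by move=> u v w; apply: subm_inj; rewrite /= addrA. Qed.
Lemma subm_addC : commutative subm_add.
Proof. by move=> u v; apply: subm_inj; rewrite /= addrC. Qed.
Lemma subm_add0 : left_id subm0 subm_add.
Proof. by move=> u; apply: subm_inj; rewrite /= add0r. Qed.
Lemma subm_addN : left_inverse subm0 subm_opp subm_add.
Proof. by move=> u; apply: subm_inj; rewrite /= addNr. Qed.
HB.instance Definition _ :=
  GRing.isZmodule.Build subm subm_addA subm_addC subm_add0 subm_addN.

Lemma subm_scaleA a b (u : subm) : subm_scale a (subm_scale b u) = subm_scale (a * b) u.
Proof. by apply: subm_inj; rewrite /= scalerA. Qed.
Lemma subm_scale1 : left_id 1 subm_scale.
Proof. by move=> u; apply: subm_inj; rewrite /= scale1r. Qed.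
Lemma subm_scaleDr : right_distributive subm_scale +%R.
Proof. by move=> a u v; apply: subm_inj; rewrite /= scalerDr. Qed.
Lemma subm_scaleDl (u : subm) : {morph subm_scale^~ u : a b / a + b}.
Proof. by move=> a b; apply: subm_inj; rewrite /= scalerDl. Qed.
HB.instance Definition _ := GRing.Zmodule_isLmodule.Build R subm
  subm_scaleA subm_scale1 subm_scaleDr subm_scaleDl.

Lemma subm_val_lin : lin (fun u : subm => sval u). Proof. by []. Qed.
Lemma subm_val_inj : injective (fun u : subm => sval u). Proof. exact: subm_inj. Qed.

(* A total (junk-valued outside S) inverse of the inclusion. *)
Definition subm_of x : subm :=
  if pselect (S x) is left h then exist _ x h else 0.

Lemma subm_ofK x : S x -> sval (subm_of x) = x.
Proof. by rewrite /subm_of; case: pselect. Qed.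

(* The quotient M/S is carried by the canonical representatives
   [quo_repr x], chosen once and for all in every coset. *)
Lemma quo_repr_ex x : exists y, `[< S (x - y) >].
Proof. by exists x; apply/asboolP; rewrite subrr; exact: sm0. Qed.

Definition quo_repr x := xchoose (quo_repr_ex x).

Lemma quo_repr_spec x : S (x - quo_repr x).
Proof. by have /asboolP := xchooseP (quo_repr_ex x). Qed.

Lemma quo_repr_eq x y : S (x - y) -> quo_repr x = quo_repr y.
Proof.
move=> h; apply: eq_xchoose => z; apply/asboolP/asboolP => h2.
  exact: sm_congr_trans (sm_congr_sym h) h2.
exact: sm_congr_trans h h2.
Qed.

Lemma quo_repr_idem x : quo_repr (quo_repr x) = quo_repr x.
Proof. exact/quo_repr_eq/sm_congr_sym/quo_repr_spec. Qed.

Definition quom := {x : M | quo_repr x = x}.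
HB.instance Definition _ := gen_eqMixin quom.
HB.instance Definition _ := gen_choiceMixin quom.

Lemma quom_inj (u v : quom) : sval u = sval v -> u = v.
Proof. case: u v => [x px] [y py] /= e; subst; congr exist; exact: Prop_irrelevance. Qed.

Definition quo_pi x : quom := exist _ (quo_repr x) (quo_repr_idem x).

Lemma quo_pi_eq x y : quo_pi x = quo_pi y <-> S (x - y).
Proof.
split=> [e|h]; last by apply: quom_inj; apply: quo_repr_eq.
have e' : quo_repr x = quo_repr y by have := congr1 sval e.
apply: (sm_congr_trans (y := quo_repr x)); first exact: quo_repr_spec.
by rewrite e'; apply/sm_congr_sym/quo_repr_spec.
Qed.

Lemma quo_pi_surj u : exists x, u = quo_pi x.
Proof. by exists (sval u); apply: quom_inj; rewrite /= (svalP u). Qed.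

Lemma quo_pi_val x : S (sval (quo_pi x) - x).
Proof. exact/sm_congr_sym/quo_repr_spec. Qed.

Definition quo_add (u v : quom) := quo_pi (sval u + sval v).
Definition quo_opp (u : quom) := quo_pi (- sval u).
Definition quo_scale (r : R) (u : quom) := quo_pi (r *: sval u).

Lemma quo_addE x y : quo_add (quo_pi x) (quo_pi y) = quo_pi (x + y).
Proof. by apply/quo_pi_eq; rewrite opprD addrACA; apply: smD; apply: quo_pi_val. Qed.
Lemma quo_oppE x : quo_opp (quo_pi x) = quo_pi (- x).
Proof. by apply/quo_pi_eq; rewrite -opprD; apply/smN/quo_pi_val. Qed.
Lemma quo_scaleE r x : quo_scale r (quo_pi x) = quo_pi (r *: x).
Proof. by apply/quo_pi_eq; rewrite -scalerBr; apply/smZ/quo_pi_val. Qed.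

Lemma quo_addA : associative quo_add.
Proof.
move=> u v w; have [x ->] := quo_pi_surj u; have [y ->] := quo_pi_surj v.
by have [z ->] := quo_pi_surj w; rewrite !quo_addE addrA.
Qed.
Lemma quo_addC : commutative quo_add.
Proof.
move=> u v; have [x ->] := quo_pi_surj u; have [y ->] := quo_pi_surj v.
by rewrite !quo_addE addrC.
Qed.
Lemma quo_add0 : left_id (quo_pi 0) quo_add.
Proof. by move=> u; have [x ->] := quo_pi_surj u; rewrite quo_addE add0r. Qed.
Lemma quo_addN : left_inverse (quo_pi 0) quo_opp quo_add.
Proof. by move=> u; have [x ->] := quo_pi_surj u; rewrite quo_oppE quo_addE addNr. Qed.
HB.instance Definition _ := GRing.isZmodule.Build quom quo_addA quo_addC quo_add0 quo_addN.

Lemma quo_piD x y : quo_pi (x + y) = quo_pi x + quo_pi y.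
Proof. by rewrite -quo_addE. Qed.

Lemma quo_scaleA a b (u : quom) : quo_scale a (quo_scale b u) = quo_scale (a * b) u.
Proof. by have [x ->] := quo_pi_surj u; rewrite !quo_scaleE scalerA. Qed.
Lemma quo_scale1 : left_id 1 quo_scale.
Proof. by move=> u; have [x ->] := quo_pi_surj u; rewrite quo_scaleE scale1r. Qed.
Lemma quo_scaleDr : right_distributive quo_scale +%R.
Proof.
move=> a u v; have [x ->] := quo_pi_surj u; have [y ->] := quo_pi_surj v.
by rewrite -quo_piD !quo_scaleE -quo_piD scalerDr.
Qed.
Lemma quo_scaleDl (u : quom) : {morph quo_scale^~ u : a b / a + b}.
Proof. by move=> a b; have [x ->] := quo_pi_surj u; rewrite !quo_scaleE -quo_piD scalerDl. Qed.
HB.instance Definition _ := GRing.Zmodule_isLmodule.Build R quom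
  quo_scaleA quo_scale1 quo_scaleDr quo_scaleDl.

Lemma quo_piZ a x : quo_pi (a *: x) = a *: quo_pi x.
Proof. by rewrite -quo_scaleE. Qed.
Lemma quo_pi_lin : lin quo_pi.
Proof. by move=> a x y; rewrite quo_piD quo_piZ. Qed.
Lemma quo_pi_eq0 x : quo_pi x = 0 <-> S x.
Proof. by have := quo_pi_eq x 0; rewrite subr0. Qed.

Definition quo_lift (T : lmodType R) (f : M -> T) (u : quom) := f (sval u).

End SubmodTheory.
End Submodules.

Section LinearMaps.
Variable R : idomainType.
Implicit Types M N T : lmodType R.

Lemma lin0 M N (f : M -> N) : lin f -> f 0 = 0.
Proof.
move=> hf; have e := hf 1 0 0; rewrite !scale1r addr0 in e.
by apply: (addrI (f 0)); rewrite addr0 -e.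
Qed.
Lemma linD M N (f : M -> N) x y : lin f -> f (x + y) = f x + f y.
Proof. by move=> hf; have := hf 1 x y; rewrite !scale1r. Qed.
Lemma linZ M N (f : M -> N) a x : lin f -> f (a *: x) = a *: f x.
Proof. by move=> hf; rewrite -[a *: x]addr0 hf lin0 // addr0. Qed.
Lemma linN M N (f : M -> N) x : lin f -> f (- x) = - f x.
Proof. by move=> hf; rewrite -scaleN1r linZ // scaleN1r. Qed.
Lemma linB M N (f : M -> N) x y : lin f -> f (x - y) = f x - f y.
Proof. by move=> hf; rewrite linD // linN. Qed.

Definition surj M N (f : M -> N) := forall z, exists y, f y = z.

Lemma inj_surj_bij M N (f : M -> N) : injective f -> surj f -> bijective f.
Proof.
move=> fi fs; have [g hg] := choice fs.
by exists g => [x|y]; [apply: fi; rewrite hg|rewrite hg].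
Qed.

Lemma bij_surj M N (f : M -> N) : bijective f -> surj f.
Proof. by move=> [g _ hg] z; exists (g z). Qed.

Definition linOn M T (P : M -> Prop) (h : M -> T) :=
  forall a x y, P x -> P y -> h (a *: x + y) = a *: h x + h y.

Lemma linOn0 M T (P : submod M) (h : M -> T) : linOn P h -> h 0 = 0.
Proof.
move=> hf; have e := hf 1 0 0 (sm0 P) (sm0 P); rewrite !scale1r addr0 in e.
by apply: (addrI (h 0)); rewrite addr0 -e.
Qed.
Lemma linOnZ M T (P : submod M) (h : M -> T) a x : linOn P h -> P x -> h (a *: x) = a *: h x.
Proof. by move=> hf px; rewrite -[a *: x]addr0 hf ?(linOn0 hf) ?addr0 //; exact: sm0. Qed.
Lemma linOnD M T (P : M -> Prop) (h : M -> T) x y :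
  linOn P h -> P x -> P y -> h (x + y) = h x + h y.
Proof. by move=> hf px py; have := hf 1 x y px py; rewrite !scale1r. Qed.
Lemma linOnB M T (P : M -> Prop) (h : M -> T) x y :
  linOn P h -> P x -> P y -> h (x - y) = h x - h y.
Proof. by move=> hf px py; have := hf (-1) y x py px; rewrite !scaleN1r addrC => ->; rewrite addrC. Qed.
Lemma sub_linOn M T (P Q : M -> Prop) (h : M -> T) :
  (forall x, Q x -> P x) -> linOn P h -> linOn Q h.
Proof. by move=> hQ hf a x y qx qy; apply: hf; apply: hQ. Qed.
Lemma linOnT M T (P : M -> Prop) (h : M -> T) : (forall x, P x) -> linOn P h -> lin h.
Proof. by move=> hP hf a x y; apply: hf. Qed.

Definition ker_sm M N (f : M -> N) (hf : lin f) : submod M.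
Proof.
refine (@SubMod _ M (fun x => f x = 0) _ _ _).
- exact: lin0.
- by move=> x y h1 h2; rewrite linD // h1 h2 addr0.
- by move=> a x h; rewrite linZ // h scaler0.
Defined.

Definition img_sm M N (f : M -> N) (hf : lin f) : submod N.
Proof.
refine (@SubMod _ N (fun y => exists x, y = f x) _ _ _).
- by exists 0; rewrite lin0.
- by move=> x y [u ->] [v ->]; exists (u + v); rewrite linD.
- by move=> a x [u ->]; exists (a *: u); rewrite linZ.
Defined.

Definition smI M (P Q : submod M) : submod M.
Proof.
refine (@SubMod _ M (fun x => P x /\ Q x) _ _ _).
- by split; apply: sm0.
- by move=> x y [h1 h2] [h3 h4]; split; apply: smD.
- by move=> a x [h1 h2]; split; apply: smZ.
Defined.

Definition ann_sm M (a : R) : submod M.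
Proof.
refine (@SubMod _ M (fun x => a *: x = 0) _ _ _).
- exact: scaler0.
- by move=> x y h1 h2; rewrite scalerDr h1 h2 addr0.
- by move=> b x h; rewrite scalerA mulrC -scalerA h scaler0.
Defined.

Definition dvd_sm (c : R) : submod R^o.
Proof.
refine (@SubMod _ R^o (fun x => dvd c x) _ _ _).
- exact: dvd0.
- by move=> x y; apply: dvdD.
- by move=> a x h; apply: dvd_mull.
Defined.

Lemma submod_ideal (P : submod R^o) : is_ideal P.
Proof. by split; [exact: sm0|split=> [x y|r x]; [exact: smD|exact: smZ]]. Qed.

Lemma sm_ideal M (P : submod M) (y : M) : is_ideal (fun r : R => P (r *: y)).
Proof.
split; first by rewrite scale0r; apply: sm0.
split=> [a b ha hb|r a ha]; first by rewrite scalerDl; apply: smD.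
by rewrite -scalerA; apply: smZ.
Qed.

Fixpoint span M (s : seq M) : M -> Prop :=
  if s is y :: s' then fun x => exists r z, span s' z /\ x = r *: y + z
  else fun x => x = 0.

Lemma span0 M (s : seq M) : span s 0.
Proof. by elim: s => [|y s IH] //=; exists 0, 0; rewrite scale0r addr0. Qed.
Lemma spanD M (s : seq M) x y : span s x -> span s y -> span s (x + y).
Proof.
elim: s x y => [|u s IH] x y /=; first by move=> -> ->; rewrite addr0.
move=> [r [z [hz ->]]] [r' [z' [hz' ->]]]; exists (r + r'), (z + z'); split; first exact: IH.
by rewrite scalerDl addrACA.
Qed.
Lemma spanZ M (s : seq M) a x : span s x -> span s (a *: x).
Proof.
elim: s x => [|u s IH] x /=; first by move=> ->; rewrite scaler0.
move=> [r [z [hz ->]]]; exists (a * r), (a *: z); split; first exact: IH.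
by rewrite scalerDr scalerA.
Qed.
Definition span_sm M (s : seq M) : submod M := SubMod (@span0 M s) (@spanD M s) (@spanZ M s).

Lemma span_head M (y : M) s : span (y :: s) y.
Proof. by exists 1, 0; split; [apply: span0|rewrite scale1r addr0]. Qed.
Lemma span_cons M (y : M) s z : span s z -> span (y :: s) z.
Proof. by move=> h; exists 0, z; rewrite scale0r add0r. Qed.
Lemma span_mem M (s : seq M) y : y \in s -> span s y.
Proof.
elim: s => [|u s IH] //; rewrite inE => /orP [/eqP ->|/IH h]; first exact: span_head.
exact: span_cons.
Qed.
Lemma span_min M (Q : submod M) (s : seq M) :
  (forall y, y \in s -> Q y) -> forall x, span s x -> Q x.
Proof.
elim: s => [|u s IH] hs x /=; first by move=> ->; exact: sm0.
move=> [r [z [hz ->]]]; apply: smD; first by apply: smZ; apply: hs; rewrite inE eqxx.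
by apply: IH => // y hy; apply: hs; rewrite inE hy orbT.
Qed.
Lemma span_subset M (s t : seq M) x : {subset s <= t} -> span s x -> span t x.
Proof. by move=> h; apply: (span_min (Q := span_sm t)) => z /h; apply: span_mem. Qed.
Lemma span_swap M (a b : M) s x : span (a :: b :: s) x -> span (b :: a :: s) x.
Proof.
move=> [r [z [[r' [z' [h ->]]] ->]]]; exists r', (r *: a + z'); split; first by exists r, z'.
by rewrite addrCA.
Qed.
Lemma span_map M N (f : M -> N) (s : seq M) x : lin f -> span s x -> span (map f s) (f x).
Proof.
move=> hf; elim: s x => [|u s IH] x /=; first by move=> ->; rewrite lin0.
by move=> [r [z [hz ->]]]; exists r, (f z); split; [apply: IH|rewrite hf].
Qed.
Lemma span_map_inj M N (f : M -> N) (s : seq M) x :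
  lin f -> injective f -> span (map f s) (f x) -> span s x.
Proof.
move=> hf fi; elim: s x => [|u s IH] x /=; first by rewrite -(lin0 hf) => /fi.
move=> [r [z [hz e]]]; exists r, (x - r *: u); split; last by rewrite addrC subrK.
by apply: IH; rewrite linB // linZ // e addrC addKr.
Qed.

Lemma fin_genP M : fin_gen M <-> exists s : seq M, forall x, span s x.
Proof.
split=> [[n [v hv]]|[s hs]].
  exists [seq v i | i <- enum 'I_n] => x; have [a ->] := hv x.
  apply: (big_ind (span _)); [exact: span0|exact: spanD|] => i _.
  by apply: spanZ; apply: span_mem; apply: map_f; rewrite mem_enum.
exists (size s), (fun i => nth 0 s i) => m.
elim: s {hs} m (hs m) => [|y s IH] m /=.
  by move=> ->; exists (fun=> 0); rewrite big_ord0.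
move=> [r [z [hz ->]]]; have [a ->] := IH z hz.
exists (fun i : 'I_(size s).+1 =>
  if (i : nat) is k.+1 then (if insub k is Some j then a j else 0) else r).
rewrite big_ord_recl /=; congr (_ + _); apply: eq_bigr => i _ /=.
by rewrite valK.
Qed.

Lemma fin_gen_surj M N (q : M -> N) : lin q -> surj q -> fin_gen M -> fin_gen N.
Proof.
move=> hq qs /fin_genP [s hs]; apply/fin_genP; exists (map q s) => z.
by have [y <-] := qs z; apply: span_map.
Qed.

Lemma fin_gen_trivial M : (forall x : M, x = 0) -> fin_gen M.
Proof. by move=> h; apply/fin_genP; exists [::]. Qed.

Lemma pairE M N (a : R) (u u' : M) (v v' : N) :
  (a *: (u, v) + (u', v') : M * N) = (a *: u + u', a *: v + v').
Proof. by []. Qed.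

Lemma fin_gen_prod M N : fin_gen M -> fin_gen N -> fin_gen (M * N)%type.
Proof.
move=> /fin_genP [s hs] /fin_genP [t ht]; apply/fin_genP.
pose inl := fun x : M => (x, 0 : N); pose inr := fun y : N => (0 : M, y).
exists (map inl s ++ map inr t) => [[x y]].
have -> : (x, y) = inl x + inr y by rewrite /inl /inr; congr pair; rewrite ?addr0 ?add0r.
apply: spanD.
  apply: (@span_subset _ (map inl s)); first by move=> z hz; rewrite mem_cat hz.
  by apply: span_map => // a u v; rewrite /inl pairE scaler0 addr0.
apply: (@span_subset _ (map inr t)); first by move=> z hz; rewrite mem_cat hz orbT.
by apply: span_map => // a u v; rewrite /inr pairE scaler0 addr0.
Qed.

Lemma choice_preimage M N (k : N -> M) :
  exists pre : M -> N, forall u, (exists z, u = k z) -> u = k (pre u).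
Proof.
have pointwise u : exists z, (exists z', u = k z') -> u = k z.
  case: (lem (exists z', u = k z')) => [[z' e]|n]; first by exists z'.
  by exists 0 => /n.
by have [pre hpre] := choice pointwise; exists pre.
Qed.

Section PIDModules.
Hypothesis hR : is_PID R.

(* Submodules of finitely spanned modules are finitely spanned: induct on the
   spanning list, the coefficients of its head in P forming a principal ideal. *)
Lemma submod_fin_span M (s : seq M) (P : submod M) : (forall x, P x -> span s x) ->
  exists t : seq M, forall x, P x <-> span t x.
Proof.
elim: s P => [|y s IH] P hP.
  exists [::] => x; split=> [/hP //|/= ->]; exact: sm0.
pose I r := exists z z', P z /\ span s z' /\ z = r *: y + z'.
have I_ideal : is_ideal I.
  split; first by exists 0, 0; rewrite scale0r addr0; split; [exact: sm0|split; [exact: span0|]].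
  split=> [a b [z [z' [pz [sz ez]]]] [w [w' [pw [sw ew]]]]|r a [z [z' [pz [sz ez]]]]].
    exists (z + w), (z' + w'); split; first exact: smD.
    by split; [exact: spanD|rewrite ez ew scalerDl addrACA].
  exists (r *: z), (r *: z'); split; first exact: smZ.
  by split; [exact: spanZ|rewrite ez scalerDr scalerA].
have [c hc] := hR I_ideal.
have [x0 [x0' [px0 [sx0 ex0]]]] : I c by apply/hc/dvd_refl.
have [t ht] := IH (smI P (span_sm s)) (fun x h => proj2 h).
exists (x0 :: t) => x; split.
  move=> px; have [r [z [hz ex]]] := hP x px.
  have [k ek] : dvd c r by apply/hc; exists x, z.
  exists k, (x - k *: x0); split; last by rewrite addrC subrK.
  apply/ht; split; first by apply: smB => //; apply: smZ.
  have -> : x - k *: x0 = z - k *: x0' by rewrite ex ex0 ek scalerDr scalerA opprD addrACA subrr add0r.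
  by apply: (smB (S := span_sm s)) => //; apply: spanZ.
move=> [r [z [hz ->]]]; apply: smD; first exact: smZ.
by have /ht [] := hz.
Qed.

Lemma fin_gen_inj M N (k : N -> M) : lin k -> injective k -> fin_gen M -> fin_gen N.
Proof.
move=> hk ki /fin_genP [s hs].
have [t ht] := submod_fin_span (P := img_sm hk) (s := s) (fun x _ => hs x).
have [pre hpre] := choice_preimage k.
apply/fin_genP; exists (map pre t) => z.
apply: (span_map_inj hk ki).
have -> : map k (map pre t) = t.
  rewrite -map_comp -[RHS]map_id; apply/eq_in_map => u ut /=.
  by rewrite -hpre //; apply/(ht u)/span_mem.
by apply/ht; exists z.
Qed.

Lemma fin_gen_subm M (S : submod M) : fin_gen M -> fin_gen (subm S).
Proof. by apply: fin_gen_inj; [exact: subm_val_lin|exact: subm_val_inj]. Qed.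

End PIDModules.
End LinearMaps.

Section CyclicModules.
Variable R : idomainType.
Implicit Types M N T : lmodType R.

Lemma quo_liftE M T (S : submod M) (f : M -> T) x :
  lin f -> (forall x, S x -> f x = 0) -> quo_lift f (quo_pi S x) = f x.
Proof.
move=> hf hk; rewrite /quo_lift; apply/eqP; rewrite -subr_eq0 -linB //.
exact/eqP/hk/quo_pi_val.
Qed.

Lemma quo_lift_lin M T (S : submod M) (f : M -> T) :
  lin f -> (forall x, S x -> f x = 0) -> lin (quo_lift (S := S) f).
Proof.
move=> hf hk a u v; have [x ->] := quo_pi_surj u; have [y ->] := quo_pi_surj v.
by rewrite -quo_piZ -quo_piD !quo_liftE.
Qed.

Definition cyc (c : R) := quom (dvd_sm c).
Definition cyc_pi (c : R) (x : R^o) : cyc c := quo_pi (dvd_sm c) x.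

Lemma cyc_pi_eq c x y : cyc_pi c x = cyc_pi c y <-> dvd c (x - y).
Proof. exact: quo_pi_eq. Qed.
Lemma cyc_pi_eq0 c x : cyc_pi c x = 0 <-> dvd c x.
Proof. exact: quo_pi_eq0. Qed.
Lemma cyc_pi_surj c (u : cyc c) : exists x, u = cyc_pi c x.
Proof. exact: quo_pi_surj. Qed.
Lemma cyc_pi_lin c : lin (cyc_pi c). Proof. exact: quo_pi_lin. Qed.
Lemma cyc_piD c x y : cyc_pi c (x + y) = cyc_pi c x + cyc_pi c y. Proof. exact: quo_piD. Qed.
Lemma cyc_piZ c (a x : R) : cyc_pi c (a * x) = a *: cyc_pi c x. Proof. exact: quo_piZ. Qed.
Lemma cyc_pi_scale1 c (a : R) : a *: cyc_pi c 1 = cyc_pi c a.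
Proof. by rewrite -cyc_piZ mulr1. Qed.

Lemma fin_gen_cyc c : fin_gen (cyc c).
Proof.
apply/fin_genP; exists [:: cyc_pi c 1] => u; have [x ->] := cyc_pi_surj u.
by exists x, 0; split=> //; rewrite addr0 cyc_pi_scale1.
Qed.

Lemma fin_gen_R : fin_gen (R^o).
Proof.
apply/fin_genP; exists [:: (1 : R^o)] => x; exists x, 0; split=> //.
by rewrite addr0; exact/esym/mulr1.
Qed.

Definition cyc_lift (c : R) T (f : R^o -> T) : cyc c -> T := quo_lift (S := dvd_sm c) f.
Arguments cyc_lift c {T} f _.

Lemma cyc_liftE (c : R) T (f : R^o -> T) (x : R^o) :
  lin f -> (forall x : R, dvd c x -> f x = 0) -> cyc_lift c f (cyc_pi c x) = f x.
Proof. by move=> hf hk; apply: (quo_liftE (S := dvd_sm c) x hf hk). Qed.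

Lemma cyc_lift_lin (c : R) T (f : R^o -> T) :
  lin f -> (forall x : R, dvd c x -> f x = 0) -> lin (cyc_lift c f).
Proof. by move=> hf hk; apply: (quo_lift_lin (S := dvd_sm c) hf hk). Qed.

Lemma cyc_unit_trivial c : c \is a GRing.unit -> forall u : cyc c, u = 0.
Proof. by move=> cu u; have [x ->] := cyc_pi_surj u; apply/cyc_pi_eq0/unit_dvd. Qed.

Lemma cyc_iso c c' : (forall x, dvd c x <-> dvd c' x) -> iso (cyc c) (cyc c').
Proof.
move=> hcc.
have kill x : dvd c x -> cyc_pi c' x = 0 by move/hcc/cyc_pi_eq0.
have liftE x : cyc_lift c (cyc_pi c') (cyc_pi c x) = cyc_pi c' x.
  exact: cyc_liftE (cyc_pi_lin c') kill.
exists (cyc_lift c (cyc_pi c')); split; first exact: cyc_lift_lin (cyc_pi_lin c') kill.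
apply: inj_surj_bij => [u v|u].
  have [x ->] := cyc_pi_surj u; have [y ->] := cyc_pi_surj v.
  by rewrite !liftE => /cyc_pi_eq/hcc/cyc_pi_eq.
by have [x ->] := cyc_pi_surj u; exists (cyc_pi c x); rewrite liftE.
Qed.

Lemma cyc0_iso : iso (R^o) (cyc 0).
Proof.
exists (cyc_pi 0); split; first exact: cyc_pi_lin.
apply: inj_surj_bij; last by move=> u; have [x ->] := cyc_pi_surj u; exists x.
by move=> x y /cyc_pi_eq [k]; rewrite mulr0 => /eqP; rewrite subr_eq0 => /eqP.
Qed.

Lemma ses_mul_cyc c : c != 0 -> ses (fun x : R^o => (x * c : R^o)) (cyc_pi c).
Proof.
move=> c0; split; first exact: fin_gen_R.
split; first exact: fin_gen_R.
split; first exact: fin_gen_cyc.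
split; first by move=> a x y; rewrite mulrDl; congr (_ + _); exact: (esym (mulrA _ _ _)).
split; first exact: cyc_pi_lin.
split; first by move=> x y /= /(mulIf c0).
split; first by move=> u; have [x ->] := cyc_pi_surj u; exists x.
by move=> y; rewrite cyc_pi_eq0; split=> [[k ->]|[x ->]]; [exists k|exists x].
Qed.

Lemma linOn_extend M T (N : submod M) (h : M -> T) (y : M) (t : T) :
  linOn N h -> (forall r, N (r *: y) -> h (r *: y) = r *: t) ->
  exists h', linOn (fun z => exists r z', N z' /\ z = r *: y + z') h' /\
    forall r z', N z' -> h' (r *: y + z') = h z' + r *: t.
Proof.
move=> hl ht.
have wd r1 z1 r2 z2 : N z1 -> N z2 -> r1 *: y + z1 = r2 *: y + z2 ->
    h z1 + r1 *: t = h z2 + r2 *: t.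
  move=> n1 n2 e.
  have e2 : (r1 - r2) *: y = z2 - z1.
    have e' : r1 *: y = r2 *: y + z2 - z1 by rewrite -e addrK.
    by rewrite scalerBl e' addrAC [r2 *: y + z2]addrC addrK.
  have : h ((r1 - r2) *: y) = (r1 - r2) *: t by apply: ht; rewrite e2; apply: smB.
  rewrite e2 (linOnB hl) // scalerBl => e3.
  have -> : r1 *: t = (h z2 - h z1) + r2 *: t by rewrite e3 subrK.
  by rewrite addrA [h z1 + _]addrC subrK.
have decomp z : exists p : R * M, (exists r z', N z' /\ z = r *: y + z') -> N p.2 /\ z = p.1 *: y + p.2.
  case: (lem (exists r z', N z' /\ z = r *: y + z')) => [[r [z' hz]]|n]; first by exists (r, z').
  by exists (0, 0) => /n.
have [f hf] := choice decomp.
have key r z' : N z' -> h (f (r *: y + z')).2 + (f (r *: y + z')).1 *: t = h z' + r *: t.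
  move=> nz; have [n2 e] := hf (r *: y + z') (ex_intro _ r (ex_intro _ z' (conj nz erefl))).
  by apply: wd => //; rewrite -e.
exists (fun z => h (f z).2 + (f z).1 *: t); split; last exact: key.
move=> a x1 x2 [r1 [z1 [n1 ->]]] [r2 [z2 [n2 ->]]].
have -> : a *: (r1 *: y + z1) + (r2 *: y + z2) = (a * r1 + r2) *: y + (a *: z1 + z2).
  by rewrite scalerDr scalerA addrACA scalerDl.
rewrite !key //; last by apply: smD => //; apply: smZ.
rewrite (linOnD hl) ?(linOnZ _ hl) //; last by apply: smZ.
by rewrite scalerDr scalerDl scalerA addrACA.
Qed.

Lemma split_surj_iso M T (h : M -> T) (s : T -> M) (hl : lin h) :
  lin s -> (forall t, h (s t) = t) -> iso M (T * subm (ker_sm hl))%type.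
Proof.
move=> sl hs.
have ker_proj z : h (z - s (h z)) = 0 by rewrite linB // hs subrr.
exists (fun z => (h z, exist _ (z - s (h z)) (ker_proj z) : subm (ker_sm hl))); split.
  move=> a x y; rewrite pairE; congr pair; first exact: hl.
  by apply: subm_inj => /=; rewrite hl sl scalerBr addrACA opprD.
apply: inj_surj_bij => [x y [e1]|[t k]]; first by rewrite e1 => /addIr.
exists (s t + sval k).
have e : h (s t + sval k) = t by rewrite linD // hs (svalP k) addr0.
congr pair; first exact: e.
by apply: subm_inj => /=; rewrite e addrC addKr.
Qed.

End CyclicModules.
Arguments cyc_lift {R} c {T} f _.

Section SerreClasses.
Variable R : idomainType.
Implicit Types M N T : lmodType R.
Hypothesis hR : is_PID R.

Lemma ses_subm_ker M T (g : M -> T) (S : submod M) :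
  lin g -> surj g -> (forall y, g y = 0 <-> S y) ->
  fin_gen M -> fin_gen T -> ses (fun u : subm S => sval u) g.
Proof.
move=> gl gs gk fM fT; split; first exact: fin_gen_subm.
split=> //; split=> //; split; first exact: subm_val_lin.
split=> //; split; first exact: subm_val_inj.
split=> // y; split=> [/gk sy|[u ->]]; first by exists (exist _ y sy).
exact/gk/(svalP u).
Qed.

Lemma span_torsion_ann M (s : seq M) :
  (forall x, span s x -> exists r : R, r != 0 /\ r *: x = 0) ->
  exists A : R, A != 0 /\ forall x, span s x -> A *: x = 0.
Proof.
elim: s => [|y s IH] hs.
  by exists 1; split; [exact: oner_neq0|move=> x /= ->; rewrite scaler0].
have [r [r0 ry]] := hs y (span_head y s).
have [A [A0 hA]] := IH (fun x sx => hs x (span_cons y sx)).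
exists (A * r); split; first by rewrite mulf_neq0.
move=> x [a [z [hz ->]]]; rewrite scalerDr.
have -> : (A * r) *: (a *: y) = 0 by rewrite scalerA mulrAC -scalerA ry scaler0.
by rewrite add0r mulrC -scalerA hA ?scaler0.
Qed.

Lemma fin_gen_torsion_ann M : fin_gen M -> torsion M ->
  exists A : R, A != 0 /\ forall x : M, A *: x = 0.
Proof.
move=> /fin_genP [s hs] tM; have [A [A0 hA]] := span_torsion_ann (s := s) (fun x _ => tM x).
by exists A; split=> // x; apply: hA.
Qed.

Section STorsion.
Variable S : (R -> Prop) -> Prop.

Lemma S_torsion_inj M N (i : N -> M) : lin i -> injective i -> S_torsion S M -> S_torsion S N.
Proof.
move=> il ii [fM [tM pM]]; split; first exact: fin_gen_inj il ii fM.
split.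
  move=> m; have [r [r0 hr]] := tM (i m); exists r; split=> //.
  by apply: ii; rewrite linZ // hr lin0.
move=> p pp npS m [n hn]; apply: ii; rewrite lin0 //; apply: (pM p pp npS).
by exists n; rewrite -linZ // hn lin0.
Qed.

(* The annihilator [r = p^k s] of a preimage splits off its [p]-part; the
   prime-to-[p] factor [s] already kills the image, and is coprime to [p^n]. *)
Lemma S_torsion_surj M N (q : M -> N) : lin q -> surj q -> S_torsion S M -> S_torsion S N.
Proof.
move=> ql qs [fM [tM pM]]; split; first exact: fin_gen_surj ql qs fM.
split.
  move=> z; have [y <-] := qs z; have [r [r0 hr]] := tM y; exists r; split=> //.
  by rewrite -linZ // hr lin0.
move=> p pp npS z [n hn]; have [y ey] := qs z; have [r [r0 hr]] := tM y.
have [pn0 [pu _]] := pp.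
have [k [s [es ns]]] := prime_power_factor hR pu pn0 r0.
have sy : s *: y = 0 by apply: (pM p pp npS); exists k; rewrite scalerA -es.
have sz : s *: z = 0 by rewrite -ey -linZ // sy lin0.
apply: coprimer_scale_eq0 hn sz.
exact/coprimer_expl/prime_coprimer.
Qed.

Lemma S_torsion_prod M N : S_torsion S M -> S_torsion S N -> S_torsion S (M * N)%type.
Proof.
move=> [fM [tM pM]] [fN [tN pN]]; split; first exact: fin_gen_prod.
split.
  move=> [x y]; have [r [r0 hr]] := tM x; have [r' [r'0 hr']] := tN y.
  exists (r * r'); split; first by rewrite mulf_neq0.
  have -> : (r * r') *: (x, y) = ((r * r') *: x, (r * r') *: y) by [].
  have -> : (r * r') *: x = 0 by rewrite mulrC -scalerA hr scaler0.
  by have -> : (r * r') *: y = 0 by rewrite -scalerA hr' scaler0.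
move=> p pp npS [x y] [n hn].
have -> : x = 0 by apply: (pM p pp npS); exists n; have := congr1 fst hn.
by have -> : y = 0 by apply: (pN p pp npS); exists n; have := congr1 snd hn.
Qed.

Lemma S_torsion_trivial M : (forall x : M, x = 0) -> S_torsion S M.
Proof.
move=> h; split; first exact: fin_gen_trivial.
split; last by move=> *; apply: h.
by move=> m; exists 1; rewrite (h m) scaler0 oner_neq0.
Qed.

Lemma S_torsion_ext M1 M2 M3 (f : M1 -> M2) (g : M2 -> M3) :
  ses f g -> S_torsion S M1 -> S_torsion S M3 -> S_torsion S M2.
Proof.
move=> [_ [f2 [_ [fl [gl [fi [gs gk]]]]]]] [_ [t1 p1]] [_ [t3 p3]]; split=> //.
split.
  move=> m; have [r [r0 hr]] := t3 (g m).
  have [x ex] : exists x, r *: m = f x by apply/gk; rewrite linZ.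
  have [s [s0 hs]] := t1 x; exists (s * r); split; first by rewrite mulf_neq0.
  by rewrite -scalerA ex -linZ // hs lin0.
move=> p pp npS m [n hn].
have gm : g m = 0 by apply: (p3 p pp npS); exists n; rewrite -linZ // hn lin0.
have [x ex] := (gk m).1 gm; rewrite ex.
suff -> : x = 0 by apply: lin0.
apply: (p1 p pp npS); exists n; apply: fi.
by rewrite linZ // -ex hn lin0.
Qed.

Lemma serre_S_torsion : serre (S_torsion S).
Proof.
have fa : full_additive (S_torsion S).
  split; first by move=> M [].
  split; first by move=> M N [f [fl /bij_surj fs]]; apply: S_torsion_surj fl fs.
  by split; [exact: S_torsion_trivial|exact: S_torsion_prod].
split; last split.
- split=> //; split.
    by move=> M N K f k hM _ _ [kl [ki _]]; apply: S_torsion_inj kl ki hM.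
  split; first by move=> M N Q f q _ hN _ [ql [qs _]]; apply: S_torsion_surj ql qs hN.
  exact: S_torsion_ext.
- by move=> N M i il ii; apply: S_torsion_inj.
- by move=> M N q ql qs; apply: S_torsion_surj.
Qed.

End STorsion.

Lemma serre_fgA : serre (@fgA R).
Proof.
have fa : full_additive (@fgA R).
  split; first by [].
  split; first by move=> M N [f [fl /bij_surj fs]]; apply: fin_gen_surj fl fs.
  by split; [exact: fin_gen_trivial|exact: fin_gen_prod].
split; last split.
- split=> //; split.
    by move=> M N K f k hM _ _ [kl [ki _]]; apply: fin_gen_inj kl ki hM.
  split; first by move=> M N Q f q _ hN _ [ql [qs _]]; apply: fin_gen_surj ql qs hN.
  by move=> M1 M2 M3 f g [_ [h _]].
- by move=> N M i il ii; apply: fin_gen_inj.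
- by move=> M N q ql qs; apply: fin_gen_surj.
Qed.

End SerreClasses.

Lemma wide_thick (R : idomainType) (C : subcat R) : wide C -> thick C.
Proof.
move=> [fa [hk [hq he]]]; split; first split=> //.
  move=> M1 M2 M3 f g hs; have [_ [_ [_ [fl [gl [fi [gs gk]]]]]]] := hs.
  split; first by move=> c1 c2; apply: (hq M1 M2 M3 f g).
  split; first by move=> c1 c3; apply: (he M1 M2 M3 f g).
  by move=> c2 c3; apply: (hk M2 M3 M1 g f).
move=> M N hMN.
pose f := fun z : (M * N)%type => ((0 : M), z.2).
apply: (hq _ _ _ f fst hMN hMN).
  by move=> a [x y] [x' y']; rewrite /f !pairE /= scaler0 addr0.
split; first by move=> a [x y] [x' y'].
split; first by move=> z; exists (z, 0).
move=> [x y] /=; split=> [->|[[u v] [-> _]]] //.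
by exists (0, y).
Qed.

Lemma serre_wide (R : idomainType) (C : subcat R) : serre C -> wide C.
Proof. by case. Qed.

Section ThickSubcategories.
Variable R : idomainType.
Implicit Types M N T : lmodType R.
Variable C : subcat R.
Hypothesis tC : thick C.

Lemma thick_fin_gen M : C M -> fin_gen M.
Proof. by case: tC => [[[h _] _] _]; apply: h. Qed.
Lemma thick_iso M N : iso M N -> C M -> C N.
Proof. by case: tC => [[[_ [h _]] _] _]; apply: h. Qed.
Lemma thick_trivial M : (forall x : M, x = 0) -> C M.
Proof. by case: tC => [[[_ [_ [h _]]] _] _]; apply: h. Qed.
Lemma thick_summand M N : C (M * N)%type -> C M.
Proof. by case: tC => _; apply. Qed.
Lemma thick_ext M1 M2 M3 (f : M1 -> M2) (g : M2 -> M3) : ses f g -> C M1 -> C M3 -> C M2.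
Proof. by case: tC => [[_ h] _] /h [_ []]. Qed.
Lemma thick_coker M1 M2 M3 (f : M1 -> M2) (g : M2 -> M3) : ses f g -> C M1 -> C M2 -> C M3.
Proof. by case: tC => [[_ h] _] /h []. Qed.

Lemma thick_split_summand M T (h : M -> T) (s : T -> M) :
  lin h -> lin s -> (forall t, h (s t) = t) -> C M -> C T.
Proof. by move=> hl sl hs /(thick_iso (split_surj_iso hl sl hs)) /thick_summand. Qed.

Hypothesis hR : is_PID R.

(* [N = R y + span s] is an extension of [R y / (R y \cap span s) = R/(c)]
   by [span s]. *)
Lemma span_cons_ses N (y : N) s : (forall x, span (y :: s) x) ->
  exists c (g : N -> cyc c), ses (fun u : subm (span_sm s) => sval u) g.
Proof.
move=> sp.
have [c hc] := hR (sm_ideal (span_sm s) y).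
have hl0 : linOn (span_sm s) (fun _ : N => (0 : cyc c)) by move=> *; rewrite scaler0 addr0.
have ht0 r : span_sm s (r *: y) -> (0 : cyc c) = r *: cyc_pi c 1.
  by move=> hr; rewrite cyc_pi_scale1; apply/esym/cyc_pi_eq0/hc.
have [g [gl0 gP]] := linOn_extend hl0 ht0.
have gl : lin g by apply: linOnT gl0 => x; exact: sp.
have gE r z' : span s z' -> g (r *: y + z') = cyc_pi c r.
  by move=> h; rewrite gP // add0r cyc_pi_scale1.
have gs : surj g.
  by move=> u; have [x ->] := cyc_pi_surj u; exists (x *: y + 0); rewrite gE //; exact: span0.
have gk z : g z = 0 <-> span_sm s z.
  have [r [z' [hz' ->]]] := sp z; rewrite gE // cyc_pi_eq0 -hc /=.
  split=> h; first exact: spanD.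
  by have := spanD h (spanZ (-1) hz'); rewrite scaleN1r addrK.
have fN : fin_gen N by apply/fin_genP; exists (y :: s).
exists c, g; exact: (@ses_subm_ker _ hR _ _ g (span_sm s) gl gs gk fN (fin_gen_cyc c)).
Qed.

Lemma thick_of_cyc (Phi : subcat R) :
  (forall N M (i : N -> M), lin i -> injective i -> Phi M -> Phi N) ->
  (forall M N (q : M -> N), lin q -> surj q -> Phi M -> Phi N) ->
  (forall c, Phi (cyc c) -> C (cyc c)) ->
  forall N, fin_gen N -> Phi N -> C N.
Proof.
move=> Phi_inj Phi_surj Phi_cyc N /fin_genP [s sp] phiN.
move En: (size s) => n; elim: n N s En sp phiN => [|n IH] N [|y s] //= En sp phiN.
  by apply: thick_trivial => x; exact: (sp x).
have [c [g hses]] := span_cons_ses sp.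
have [_ [_ [_ [fl [gl [fi [gs _]]]]]]] := hses.
apply: (thick_ext hses); last exact/Phi_cyc/(Phi_surj _ _ g gl gs phiN).
apply: (IH _ (map (subm_of (span_sm s)) s)); first by rewrite size_map; case: En.
  move=> x; apply: (span_map_inj fl fi).
  have -> : map (fun u : subm (span_sm s) => sval u) (map (subm_of (span_sm s)) s) = s.
    rewrite -map_comp -[RHS]map_id; apply/eq_in_map => u us /=.
    exact/subm_ofK/span_mem.
  by case: x.
exact: Phi_inj fl fi phiN.
Qed.

End ThickSubcategories.

Section TorsionFreeCase.
Variable R : idomainType.
Implicit Types M N : lmodType R.
Hypothesis hR : is_PID R.

Definition free_elt M (x : M) := forall r : R, r *: x = 0 -> r = 0.

Lemma span_functional_cons M (s : seq M) (y x0 : M) (phi : M -> R^o) :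
  linOn (span s) phi -> span s x0 -> phi x0 != 0 ->
  exists phi' : M -> R^o, linOn (span (y :: s)) phi' /\ exists x, span (y :: s) x /\ phi' x != 0.
Proof.
move=> pl hx0 px0; have [d hd] := hR (sm_ideal (span_sm s) y).
case: (eqVneq d 0) => [d0|d0].
  have ht r : span_sm s (r *: y) -> phi (r *: y) = r *: (0 : R^o).
    move=> /hd; rewrite d0 => -[k]; rewrite mulr0 => ->; rewrite scale0r scaler0.
    exact: (linOn0 (P := span_sm s) pl).
  have [h [hl hP]] := linOn_extend (N := span_sm s) pl ht.
  exists h; split; first exact: hl.
  exists x0; split; first exact: span_cons.
  by have := hP 0 x0 hx0; rewrite scale0r add0r scaler0 addr0 => ->.
have dz z : span (y :: s) z -> span s (d *: z).
  move=> [r [z' [hz' ->]]]; rewrite scalerDr scalerA; apply: spanD; last exact: spanZ.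
  exact/hd/dvd_mul_r.
exists (fun z => phi (d *: z)); split.
  move=> a x1 x2 h1 h2; rewrite scalerDr scalerA mulrC -scalerA.
  by apply: pl; apply: dz.
exists x0; split; first exact: span_cons.
by rewrite (linOnZ (P := span_sm s)) // mulf_neq0.
Qed.

Lemma span_functional_free_head M (s : seq M) (y : M) (A : R) :
  A != 0 -> (forall z, span s z -> A *: z = 0) -> free_elt y ->
  exists phi : M -> R^o, linOn (span (y :: s)) phi /\ exists x, span (y :: s) x /\ phi x != 0.
Proof.
move=> A0 hA ny.
have hl0 : linOn (span_sm s) (fun _ : M => (0 : R^o)) by move=> *; rewrite scaler0 addr0.
have ht r : span_sm s (r *: y) -> (0 : R^o) = r *: (1 : R^o).
  move=> hr; have : (A * r) *: y = 0 by rewrite -scalerA hA.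
  by move/ny/eqP; rewrite mulf_eq0 (negbTE A0) /= => /eqP ->; rewrite scale0r.
have [h [hl hP]] := linOn_extend (N := span_sm s) hl0 ht.
exists h; split; first exact: hl.
exists y; split; first exact: span_head.
by have := hP 1 0 (span0 s); rewrite scale1r addr0 add0r => ->; rewrite scale1r oner_eq0.
Qed.

Lemma span_functional M (s : seq M) : (exists x, span s x /\ free_elt x) ->
  exists phi : M -> R^o, linOn (span s) phi /\ exists x, span s x /\ phi x != 0.
Proof.
elim: s => [|y s IH] [x [hx nx]].
  by move: hx => /= hx; subst x; have := nx 1 (scaler0 _ _) => /eqP; rewrite oner_eq0.
case: (lem (exists x, span s x /\ free_elt x)) => [ex|nex].
  by have [phi [pl [x0 [hx0 px0]]]] := IH ex; apply: span_functional_cons pl hx0 px0.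
have tor z : span s z -> exists r : R, r != 0 /\ r *: z = 0.
  move=> hz; apply: contrapT => nz; apply: nex; exists z; split=> // r hr.
  by apply: contrapT => /eqP r0; apply: nz; exists r.
have [A [A0 hA]] := span_torsion_ann tor.
apply: (span_functional_free_head A0 hA) => r hr; apply/eqP; apply: contraT => r0.
move: hx => [a [z [hz ex]]].
have : (r * A) *: x = 0.
  have e : r * A * a = A * a * r by ring.
  rewrite ex scalerDr scalerA e -scalerA hr scaler0 add0r.
  by rewrite -scalerA hA ?scaler0.
by move/nx/eqP; rewrite mulf_eq0 (negbTE r0) (negbTE A0).
Qed.

(* A nonzero functional [phi] has image [(c)] with [c != 0]; then [phi / c]
   is a split surjection onto [R]. *)
Lemma R_summand_of_nontorsion M : fin_gen M -> ~ torsion M ->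
  exists (h : M -> R^o) (s : R^o -> M), [/\ lin h, lin s & forall t, h (s t) = t].
Proof.
move=> /fin_genP [s hs] nt.
have [m nm] : exists m : M, free_elt m.
  apply: contrapT => nn; apply: nt => m; apply: contrapT => nr; apply: nn.
  by exists m => r hr; apply: contrapT => /eqP r0; apply: nr; exists r.
have [phi0 [pl0 [x1 [_ px1]]]] := span_functional (ex_intro _ m (conj (hs m) nm)).
have pl : lin phi0 by apply: linOnT pl0.
have [c hc] := hR (submod_ideal (img_sm pl)).
have c0 : c != 0.
  apply: contraNneq px1 => e; have : dvd c (phi0 x1) by apply/hc; exists x1.
  by rewrite e => -[k ->]; rewrite mulr0.
have [phi hphi] := @choice M R^o (fun x t => phi0 x = t * c)
  (fun x => (hc (phi0 x)).1 (ex_intro _ x erefl)).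
have phil : lin phi.
  move=> a x y; apply: (mulIf c0); rewrite -hphi pl !hphi.
  by rewrite mulrDl; congr (_ + _); exact: mulrA.
have [x0 ex0] : img_sm pl c by apply/hc; apply: dvd_refl.
exists phi, (fun t : R^o => t *: x0); split=> //.
  by move=> a u v; rewrite scalerDl scalerA.
by move=> t; apply: (mulIf c0); rewrite -hphi linZ // -ex0.
Qed.

Section Thick.
Variable C : subcat R.
Hypothesis tC : thick C.

Lemma thick_R_of_nontorsion M : C M -> ~ torsion M -> C (R^o).
Proof.
move=> cM nt; have [h [s [hl sl hs]]] := R_summand_of_nontorsion (thick_fin_gen tC cM) nt.
exact: thick_split_summand hl sl hs cM.
Qed.

Lemma thick_fgA_of_R : C (R^o) -> forall N, fin_gen N -> C N.
Proof.
move=> cR N fN; apply: (thick_of_cyc tC hR (Phi := fun _ => True)) => // c _.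
case: (eqVneq c 0) => [->|c0]; first by apply: (thick_iso tC (@cyc0_iso R)).
by apply: (thick_coker tC (ses_mul_cyc c0)).
Qed.

End Thick.
End TorsionFreeCase.

Section TorsionCase.
Variable R : idomainType.
Implicit Types M N : lmodType R.
Implicit Types c d e p q : R.
Hypothesis hR : is_PID R.

Lemma cyc_annihilated c (u : cyc c) : c *: u = 0.
Proof. by have [x ->] := cyc_pi_surj u; rewrite -cyc_piZ; apply/cyc_pi_eq0/dvd_mul_r. Qed.

Lemma S_torsion_cyc_prime (S : (R -> Prop) -> Prop) p : is_prime_elt p ->
  S_torsion S (cyc p) <-> in_S S p.
Proof.
move=> pp; have [p0 [pu _]] := pp; split.
  move=> [_ [_ hpart]]; apply: contrapT => nin; apply: pu; apply/dvd1_unit/cyc_pi_eq0.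
  apply: (hpart p pp nin); exists 1%N.
  by rewrite expr1 cyc_pi_scale1; apply/cyc_pi_eq0/dvd_refl.
move=> [P [SP hP]]; split; first exact: fin_gen_cyc.
split; first by move=> u; exists p; split=> //; apply: cyc_annihilated.
move=> q qp nin u [n hn].
have npq : ~ dvd p (q ^+ n).
  move=> /(prime_dvd_expr pp) pq; apply: nin; exists P; split=> // x; rewrite hP.
  by split; apply: dvd_trans; [apply: prime_dvd_prime|].
exact: coprimer_scale_eq0 (prime_coprimer hR pp npq) (cyc_annihilated u) hn.
Qed.

Lemma ses_cyc_mul d e : e != 0 ->
  exists (f : cyc d -> cyc (d * e)) (g : cyc (d * e) -> cyc e), ses f g.
Proof.
move=> e0.
have fk x : dvd d x -> cyc_pi (d * e) (x * e) = 0.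
  by move=> [k ->]; apply/cyc_pi_eq0; exists k; rewrite mulrA.
have fl0 : lin (fun x : R^o => cyc_pi (d * e) (x * e)).
  by move=> a x y; rewrite mulrDl -mulrA cyc_piD cyc_piZ.
have gk x : dvd (d * e) x -> cyc_pi e x = 0.
  by move=> [k ->]; apply/cyc_pi_eq0; exists (k * d); rewrite mulrA.
have fE x : cyc_lift d _ (cyc_pi d x) = cyc_pi (d * e) (x * e) := cyc_liftE x fl0 fk.
have gE x : cyc_lift (d * e) (cyc_pi e) (cyc_pi (d * e) x) = cyc_pi e x.
  exact: cyc_liftE (cyc_pi_lin e) gk.
exists (cyc_lift d (fun x : R^o => cyc_pi (d * e) (x * e))), (cyc_lift (d * e) (cyc_pi e)).
split; first exact: fin_gen_cyc.
split; first exact: fin_gen_cyc.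
split; first exact: fin_gen_cyc.
split; first exact: cyc_lift_lin fl0 fk.
split; first exact: cyc_lift_lin (cyc_pi_lin e) gk.
split.
  move=> u v; have [x ->] := cyc_pi_surj u; have [y ->] := cyc_pi_surj v.
  by rewrite !fE => /cyc_pi_eq; rewrite -mulrBl => /(dvd_mul2r e0) /cyc_pi_eq.
split; first by move=> u; have [x ->] := cyc_pi_surj u; exists (cyc_pi (d * e) x); rewrite gE.
move=> u; have [y ->] := cyc_pi_surj u; rewrite gE; split=> [/cyc_pi_eq0 [k ->]|[v]].
  by exists (cyc_pi d k); rewrite fE.
have [x ->] := cyc_pi_surj v; rewrite fE => /cyc_pi_eq h.
apply/cyc_pi_eq0; rewrite -(subrK (x * e) y); apply: dvdD; last exact: dvd_mul_l.
by apply: dvd_trans h; apply: dvd_mul_l.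
Qed.

Definition cyc_primes (C : subcat R) (P : R -> Prop) :=
  is_maximal_ideal P /\ exists p, (forall x, P x <-> dvd p x) /\ C (cyc p).

Section Thick.
Variable C : subcat R.
Hypothesis tC : thick C.

Lemma in_cyc_primes p : is_prime_elt p -> in_S (cyc_primes C) p <-> C (cyc p).
Proof.
move=> pp; split.
  move=> [P [[_ [p' [hp' Cp']]] hP]]; apply: (thick_iso tC _ Cp'); apply: cyc_iso => x.
  by rewrite -hp' hP.
move=> Cp; exists (dvd p); split; last by [].
by split; [exact: prime_elt_maximal|exists p].
Qed.

(* Well-founded induction on [c] along proper divisibility, splitting
   [R/(de)] as an extension of [R/(e)] by [R/(d)]. *)
Lemma thick_cyc_of_S_torsion c : c != 0 -> S_torsion (cyc_primes C) (cyc c) -> C (cyc c).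
Proof.
elim/(well_founded_ind (proper_dvd_wf hR)): c => c IH c0 hst.
case: (lem (c \is a GRing.unit)) => [cu|ncu].
  exact/(thick_trivial tC)/cyc_unit_trivial.
case: (lem (exists d e, c = d * e /\ ~ d \is a GRing.unit /\ ~ e \is a GRing.unit)).
  move=> [d [e [cde [du eu]]]]; subst c.
  have /andP [d0 e0] : (d != 0) && (e != 0) by rewrite -negb_or -mulf_eq0.
  have [f [g hses]] := ses_cyc_mul d e0.
  have [_ [_ [_ [fl [gl [fi [gs _]]]]]]] := hses.
  apply: (thick_ext tC hses).
    apply: IH => //; last exact: (S_torsion_inj hR fl fi hst).
    split=> //; split; first exact: dvd_mul_r.
    move=> [k ek]; apply: eu; apply/dvd1_unit; exists k; apply: (mulIf d0).
    by rewrite mul1r {1}ek; ring.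
  apply: IH => //; last exact: (S_torsion_surj hR gl gs hst).
  split=> //; split; first exact: dvd_mul_l.
  move=> [k ek]; apply: du; apply/dvd1_unit; exists k; apply: (mulIf e0).
  by rewrite mul1r {1}ek; ring.
move=> nred; have pc : is_prime_elt c.
  apply: irreducible_prime => //; split=> //; split=> // d e cde.
  case: (lem (d \is a GRing.unit)) => [|du]; first by left.
  case: (lem (e \is a GRing.unit)) => [|eu]; first by right.
  by exfalso; apply: nred; exists d, e.
by apply/(in_cyc_primes pc)/(S_torsion_cyc_prime _ pc).
Qed.

Lemma thick_of_S_torsion N : S_torsion (cyc_primes C) N -> C N.
Proof.
move=> hN; apply: (thick_of_cyc tC hR (Phi := S_torsion (cyc_primes C)) _ _ _ (proj1 hN) hN).
- by move=> N' M i il ii; apply: S_torsion_inj.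
- by move=> M N' q ql qs; apply: S_torsion_surj.
move=> c hc; apply: thick_cyc_of_S_torsion => //.
apply/eqP => c0; have [_ [ht _]] := hc.
have [r [r0 hr]] := ht (cyc_pi c 1); move: hr; rewrite cyc_pi_scale1 => /cyc_pi_eq0.
by rewrite c0 => -[k e]; move: r0; rewrite e mulr0 eqxx.
Qed.

End Thick.
End TorsionCase.

Section CyclicSummands.
Variable R : idomainType.
Implicit Types M Y : lmodType R.
Implicit Types a b c d e p q : R.
Hypothesis hR : is_PID R.

Lemma cyc_diag_map a p : exists f : cyc (a * p) -> (cyc p * cyc (a * (a * p)))%type,
  lin f /\ forall x, f (cyc_pi _ x) = (cyc_pi p x, cyc_pi (a * (a * p)) (a * x)).
Proof.
pose f0 := fun x : R^o => (cyc_pi p x, cyc_pi (a * (a * p)) (a * x)).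
have fl : lin f0.
  move=> b x y; rewrite /f0 pairE; congr pair; first exact: cyc_pi_lin.
  by rewrite -cyc_piZ -cyc_piD; congr cyc_pi; rewrite /GRing.scale /=; ring.
have fk x : dvd (a * p) x -> f0 x = 0.
  move=> [k ->]; rewrite /f0; congr pair; apply/cyc_pi_eq0.
    by rewrite mulrA; apply: dvd_mul_l.
  by exists k; ring.
by exists (cyc_lift (a * p) f0); split; [exact: cyc_lift_lin|move=> x; exact: cyc_liftE].
Qed.

Lemma cyc_diff_map a p : exists g : (cyc p * cyc (a * (a * p)))%type -> cyc (a * p),
  lin g /\ forall u y, g (cyc_pi p u, cyc_pi _ y) = cyc_pi (a * p) (y - a * u).
Proof.
pose g1 := cyc_lift p (fun w : R^o => cyc_pi (a * p) (- (a * w))).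
have g1l0 : lin (fun w : R^o => cyc_pi (a * p) (- (a * w))).
  by move=> b x y; rewrite -cyc_piZ -cyc_piD; congr cyc_pi; rewrite /GRing.scale /=; ring.
have g1k x : dvd p x -> cyc_pi (a * p) (- (a * x)) = 0.
  by move=> [k ->]; apply/cyc_pi_eq0; exists (- k); ring.
pose g2 := cyc_lift (a * (a * p)) (cyc_pi (a * p)).
have g2k x : dvd (a * (a * p)) x -> cyc_pi (a * p) x = 0.
  by move=> h; apply/cyc_pi_eq0; apply: dvd_trans h; apply: dvd_mul_l.
have g1l : lin g1 := cyc_lift_lin g1l0 g1k.
have g2l : lin g2 := cyc_lift_lin (cyc_pi_lin _) g2k.
exists (fun z => g1 z.1 + g2 z.2); split.
  by move=> b [z1 z2] [z1' z2']; rewrite pairE /= g1l g2l scalerDr addrACA.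
move=> u y; rewrite /= /g1 /g2 !cyc_liftE //; last exact: cyc_pi_lin.
by rewrite addrC -cyc_piD.
Qed.

(* [0 -> R/(ap) -> R/(p) x R/(a^2 p) -> R/(ap) -> 0], with maps
   [x |-> (x, a x)] and [(u, y) |-> y - a u]. *)
Lemma ses_cyc_split a p : a != 0 ->
  exists (f : cyc (a * p) -> (cyc p * cyc (a * (a * p)))%type)
    (g : (cyc p * cyc (a * (a * p)))%type -> cyc (a * p)), ses f g.
Proof.
move=> a0; have [f [fl fE]] := cyc_diag_map a p; have [g [gl gE]] := cyc_diff_map a p.
exists f, g.
split; first exact: fin_gen_cyc.
split; first by apply: fin_gen_prod; exact: fin_gen_cyc.
split; first exact: fin_gen_cyc.
do 2!split=> //.
split.
  move=> u v; have [x ->] := cyc_pi_surj u; have [y ->] := cyc_pi_surj v.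
  rewrite !fE => /(congr1 snd) /= /cyc_pi_eq h.
  by apply/cyc_pi_eq; apply: (dvd_mul2l a0); rewrite mulrBr.
split.
  move=> z; have [y ->] := cyc_pi_surj z; exists (cyc_pi p 0, cyc_pi _ y).
  by rewrite gE mulr0 subr0.
move=> [z1 z2]; have [u ->] := cyc_pi_surj z1; have [y ->] := cyc_pi_surj z2.
rewrite gE; split.
  move=> /cyc_pi_eq0 [t et]; exists (cyc_pi (a * p) (u + t * p)); rewrite fE.
  congr pair; first by apply/cyc_pi_eq; exists (- t); ring.
  by congr cyc_pi; rewrite -(subrK (a * u) y) et; ring.
move=> [w]; have [x ->] := cyc_pi_surj w; rewrite fE => e.
have /cyc_pi_eq [k1 e1] := congr1 fst e.
have /cyc_pi_eq h2 := congr1 snd e.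
apply/cyc_pi_eq0; rewrite (_ : y - a * u = (y - a * x) - (a * (u - x))); last by ring.
rewrite e1; apply: dvdB; first by apply: dvd_trans h2; apply: dvd_mul_l.
by exists k1; ring.
Qed.

Lemma thick_cyc_dvd (C : subcat R) a p : thick C -> a != 0 -> C (cyc (a * p)) -> C (cyc p).
Proof.
move=> tC a0 Cap; have [f [g hses]] := ses_cyc_split p a0.
exact: (thick_summand tC (thick_ext tC hses Cap Cap)).
Qed.

(* [R/(q)] is injective as an [R/(q)]-module: a map defined on [R y] extends
   one generator at a time, the obstruction vanishing because [q] kills [Y]. *)
Lemma cyc_map_extension Y (w : seq Y) q (y : Y) : (forall x, span w x) -> q != 0 ->
  (forall z : Y, q *: z = 0) -> (forall r, r *: y = 0 -> dvd q r) ->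
  exists h : Y -> cyc q, lin h /\ h y = cyc_pi q 1.
Proof.
move=> hw q0 qk ann.
suff [h [hl hy]] : exists h : Y -> cyc q, linOn (span (y :: w)) h /\ h y = cyc_pi q 1.
  by exists h; split=> //; apply: linOnT hl => x; apply/span_cons/hw.
elim: w {hw} => [|w0 w [h [hl hy]]].
  have hl0 : linOn (span_sm (Nil Y)) (fun _ => (0 : cyc q)) by move=> *; rewrite scaler0 addr0.
  have ht r : span_sm (Nil Y) (r *: y) -> (0 : cyc q) = r *: cyc_pi q 1.
    by move=> hr; rewrite cyc_pi_scale1; apply/esym/cyc_pi_eq0/ann.
  have [h [hl hP]] := linOn_extend hl0 ht.
  exists h; split; first exact: hl.
  by have := hP 1 0 erefl; rewrite scale1r addr0 add0r scale1r.
pose N := span_sm (y :: w).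
have [d hd] := hR (sm_ideal N w0).
have [e qe] : dvd d q by apply/hd; rewrite qk; apply: span0.
have e0 : e != 0 by apply: contra_neq q0 => e1; rewrite qe e1 mul0r.
have hdN : N (d *: w0) by apply/hd; apply: dvd_refl.
have [u0 hu0] := cyc_pi_surj (h (d *: w0)).
have [t0 ht0] : dvd d u0.
  have : e *: h (d *: w0) = 0.
    by rewrite -(linOnZ (P := N)) // scalerA -qe qk (linOn0 (P := N) hl).
  by rewrite hu0 -cyc_piZ => /cyc_pi_eq0; rewrite qe; exact: dvd_mul2l.
have ht r : N (r *: w0) -> h (r *: w0) = r *: cyc_pi q t0.
  move=> /hd [k ->]; rewrite -[(k * d) *: w0]scalerA (linOnZ (P := N)) // hu0 ht0 -!cyc_piZ.
  by congr cyc_pi; ring.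
have [h' [hl' hP']] := linOn_extend (N := N) hl ht.
exists h'; split; first by apply: sub_linOn hl' => x /span_swap.
by have := hP' 0 y (span_head y w); rewrite !scale0r add0r addr0 hy.
Qed.

Lemma prime_pow_ann p j Y (y : Y) : is_prime_elt p ->
  p ^+ j *: y != 0 -> p ^+ j.+1 *: y = 0 -> forall r, r *: y = 0 -> dvd (p ^+ j.+1) r.
Proof.
move=> pp nz hk r hr.
have [g [u [v [gr [gq eg]]]]] := bezout hR r (p ^+ j.+1).
have gy : g *: y = 0 by rewrite eg scalerDl -!scalerA hr hk !scaler0 addr0.
case: (dvd_prime_exprS hR pp gq) => [h|[k ek]]; first exact: dvd_trans h gr.
by move: nz; rewrite ek -scalerA gy scaler0 eqxx.
Qed.

Lemma nat_first_step (P : nat -> Prop) k : P k -> ~ P 0%N -> exists j, P j.+1 /\ ~ P j.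
Proof.
elim: k => [//|k IH] hk n0; case: (lem (P k)) => [hk'|nk]; [exact: IH|by exists k].
Qed.

(* Take [j] least with [p^(j+1) Y = 0] and [y1] with [p^j y1 != 0]: then
   [R y1] is a copy of [R/(p^(j+1))], and it splits off by [cyc_map_extension]. *)
Lemma pow_torsion_cyc_summand p k Y (y : Y) : is_prime_elt p -> fin_gen Y ->
  (forall z : Y, p ^+ k *: z = 0) -> y != 0 ->
  exists j (h : Y -> cyc (p ^+ j.+1)) (s : cyc (p ^+ j.+1) -> Y),
    [/\ lin h, lin s & forall t, h (s t) = t].
Proof.
move=> pp /fin_genP [w hw] pk y0.
have [p0 _] := pp.
have [j [Pj nPj]] := nat_first_step (P := fun j => forall z : Y, p ^+ j *: z = 0) pk
  (fun h0 => negP y0 (introT eqP (etrans (esym (scale1r y)) (h0 y)))).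
have [y1 hy1] : exists y1 : Y, p ^+ j *: y1 != 0.
  apply: contrapT => nex; apply: nPj => z; apply: contrapT => /eqP nz.
  by apply: nex; exists z.
have [h [hl hy]] := cyc_map_extension hw (expf_neq0 _ p0) Pj (prime_pow_ann pp hy1 (Pj y1)).
have sl0 : lin (fun r : R^o => (r : R) *: y1) by move=> r u v; rewrite scalerDl scalerA.
have sk x : dvd (p ^+ j.+1) x -> x *: y1 = 0 by move=> [l ->]; rewrite -scalerA Pj scaler0.
exists j, h, (cyc_lift (p ^+ j.+1) (fun r : R^o => (r : R) *: y1)); split=> //.
  exact: cyc_lift_lin sl0 sk.
move=> t; have [x ->] := cyc_pi_surj t.
by rewrite cyc_liftE // linZ // hy cyc_pi_scale1.
Qed.

Lemma primary_component_split M a b : coprimer a b -> (forall x : M, (a * b) *: x = 0) ->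
  exists (h : M -> subm (ann_sm M a)) (s : subm (ann_sm M a) -> M),
    [/\ lin h, lin s & forall t, h (s t) = t].
Proof.
move=> [u [v e]] ab0.
have kill (x : M) : a *: ((v * b) *: x) = 0 by rewrite scalerA (mulrCA a v b) -scalerA ab0 scaler0.
exists (fun x => exist _ ((v * b) *: x) (kill x) : subm (ann_sm M a)), (fun t => sval t).
split; [|exact: subm_val_lin|].
  by move=> r x y; apply: subm_inj => /=; rewrite scalerDr !scalerA mulrC.
move=> t; apply: subm_inj => /=.
have at0 : (u * a) *: sval t = 0 by rewrite -scalerA (svalP t) scaler0.
by rewrite -{2}[sval t]scale1r -e scalerDl at0 add0r.
Qed.

End CyclicSummands.

Section Classification.
Variable R : idomainType.
Implicit Types M N : lmodType R.
Implicit Types (C D : subcat R) (p : R).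
Hypothesis hR : is_PID R.

Section Thick.
Variable C : subcat R.
Hypothesis tC : thick C.

(* A nonzero [m] with [p^n m = 0] lives in the [p]-primary summand of [M],
   which has a summand [R/(p^(j+1))], which in turn yields [R/(p)]. *)
Lemma thick_sub_S_torsion M : ~ C (R^o) -> C M -> S_torsion (cyc_primes C) M.
Proof.
move=> nR cM; have fM := thick_fin_gen tC cM.
have tM : torsion M.
  by apply: contrapT => nt; apply: nR; exact: (thick_R_of_nontorsion hR tC cM nt).
split=> //; split=> // p pp nin m [n hn].
apply: contrapT => /eqP m0; apply: nin; apply/(in_cyc_primes hR tC pp).
have [A [A0 hA]] := fin_gen_torsion_ann fM tM.
have [p0 [pu _]] := pp.
have [k [s [eA ns]]] := prime_power_factor hR pu p0 A0.
have cps := prime_coprimer hR pp ns.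
have mk : p ^+ k *: m = 0.
  apply: (coprimer_scale_eq0 (coprimer_expl n cps)).
    by rewrite scalerA mulrC -scalerA hn scaler0.
  by rewrite scalerA mulrC -eA hA.
have Ak (x : M) : (p ^+ k * s) *: x = 0 by rewrite -eA hA.
have [h [s' [hl sl hs]]] := primary_component_split (coprimer_expl k cps) Ak.
have CK := (thick_split_summand tC hl sl hs cM).
have Pk (z : subm (ann_sm M (p ^+ k))) : p ^+ k *: z = 0 by apply: subm_inj; exact: svalP z.
have m_ne0 : exist _ m mk != 0 :> subm (ann_sm M (p ^+ k)).
  by apply: contra m0 => /eqP /(congr1 sval) /= ->.
have [j [h' [s'' [hl' sl' hs']]]] :=
  pow_torsion_cyc_summand hR pp (fin_gen_subm hR (ann_sm M (p ^+ k)) fM) Pk m_ne0.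
apply: (thick_cyc_dvd tC (a := p ^+ j)); first exact: expf_neq0.
by rewrite -exprSr; exact: (thick_split_summand tC hl' sl' hs' CK).
Qed.

Lemma thick_classification :
  (C (R^o) /\ forall N, C N <-> fin_gen N) \/
  (~ C (R^o) /\ forall N, C N <-> S_torsion (cyc_primes C) N).
Proof.
case: (lem (C (R^o))) => [cR|nR]; [left|right]; split=> // N; split.
- exact: (thick_fin_gen tC).
- exact: (thick_fgA_of_R hR tC cR).
- exact: thick_sub_S_torsion.
- exact: (thick_of_S_torsion hR tC).
Qed.

Lemma thick_serre : serre C.
Proof.
case: thick_classification => [[_ h]|[_ h]].
  have -> : C = @fgA R by apply/predeqP => M; rewrite h.
  exact: (serre_fgA hR).
have -> : C = S_torsion (cyc_primes C) by apply/predeqP => M; rewrite h.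
exact: (serre_S_torsion hR).
Qed.

End Thick.
End Classification.

Section SpecCorrespondence.
Variable R : idomainType.
Implicit Types M N : lmodType R.
Implicit Types (C D : subcat R) (p : R) (P : R -> Prop).
Hypothesis hR : is_PID R.

Lemma thick_iff_wide C : thick C <-> wide C.
Proof. by split=> [/(thick_serre hR) []|/wide_thick]. Qed.

Lemma wide_iff_serre C : wide C <-> serre C.
Proof. by split=> [/wide_thick /(thick_serre hR)|[]]. Qed.

Lemma thick_iff_fgA_or_S_torsion C : thick C <->
  same_subcat C (@fgA R) \/
  exists S, (forall P, S P -> is_maximal_ideal P) /\ same_subcat C (S_torsion S).
Proof.
split=> [tC|[h|[S [_ h]]]].
- case: (thick_classification hR tC) => [[_ h]|[_ h]]; first by left.
  by right; exists (cyc_primes C); split=> // P [].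
- have -> : C = @fgA R by apply/predeqP.
  exact/wide_thick/serre_wide/serre_fgA.
- have -> : C = S_torsion S by apply/predeqP.
  exact/wide_thick/serre_wide/serre_S_torsion.
Qed.

Definition spec_of C P := is_prime_ideal P /\
  (C (R^o) \/ exists p, is_prime_elt p /\ (forall x, P x <-> dvd p x) /\ C (cyc p)).

Lemma spec_of_ext C D : same_subcat C D -> same_specset (spec_of C) (spec_of D).
Proof. by move=> h; have -> : C = D by apply/predeqP. Qed.

Lemma spec_of_closed C : spec_closed (spec_of C).
Proof.
split=> [P [] //|P [pP [cR|[p [pp [hp Cp]]]]]].
  exists (fun x => x = 0); split; first exact: zero_ideal.
  split; first by split=> // x ->; case: pP => [[]].
  by move=> Q [pQ _]; split=> //; left.
exists (dvd p); split; first exact: dvd_ideal.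
split; first by split=> // x /hp.
move=> Q [pQ sQ]; split=> //; right; exists p; split=> //; split=> //.
have [_ [_ mx]] := prime_elt_maximal hR pp.
case: (mx Q (proj1 pQ) sQ) => [h|q1]; last by case: pQ => _ [].
by move=> x; split; [apply: h|apply: sQ].
Qed.

Lemma spec_of_zero C : spec_of C (fun x => x = 0) <-> C (R^o).
Proof.
split=> [[_ [//|[p [[p0 _] [hp _]]]]]|cR]; last by split; [exact: zero_prime_ideal|left].
by move: p0; rewrite ((hp p).2 (dvd_refl p)) eqxx.
Qed.

Lemma spec_of_prime C p : thick C -> is_prime_elt p -> spec_of C (dvd p) <-> C (cyc p).
Proof.
move=> tC pp; split=> [[_ [cR|[p' [_ [hp Cp']]]]]|Cp].
  exact: (thick_fgA_of_R hR tC cR (fin_gen_cyc p)).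
  by apply: (thick_iso tC _ Cp'); apply: cyc_iso => x; rewrite hp.
by split; [exact: prime_elt_ideal|right; exists p].
Qed.

Lemma S_torsion_eq (S S' : (R -> Prop) -> Prop) :
  (forall p, is_prime_elt p -> in_S S p <-> in_S S' p) ->
  same_subcat (S_torsion S) (S_torsion S').
Proof.
move=> hS M; split=> [] [f [t pt]]; split=> //; split=> // p pp nin;
  by apply: pt => // /(hS p pp).
Qed.

Lemma spec_of_inj C D : thick C -> thick D ->
  same_specset (spec_of C) (spec_of D) -> same_subcat C D.
Proof.
move=> tC tD hF.
have eR : C (R^o) <-> D (R^o).
  by rewrite -!spec_of_zero; apply: hF; exact: zero_prime_ideal.
case: (thick_classification hR tC) => [[cR hC]|[nC hC]];
  case: (thick_classification hR tD) => [[dR hD]|[nD hD]].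
- by move=> M; rewrite hC hD.
- by exfalso; apply/nD/eR.
- by exfalso; apply/nC/eR.
move=> M; rewrite hC hD; apply: S_torsion_eq => p pp.
rewrite (in_cyc_primes hR tC pp) (in_cyc_primes hR tD pp).
rewrite -(spec_of_prime tC pp) -(spec_of_prime tD pp).
by apply: hF; exact: prime_elt_ideal.
Qed.

Lemma spec_of_surj T : spec_closed T -> exists C, thick C /\ same_specset (spec_of C) T.
Proof.
move=> [Tp Tc]; case: (lem (T (fun x => x = 0))) => [T0|nT0].
  exists (@fgA R); split; first exact/wide_thick/serre_wide/serre_fgA.
  move=> P pP; split=> _; last by split=> //; left; exact: fin_gen_R.
  have [I [_ [[_ I0] hQ]]] := Tc _ T0; apply: hQ; split=> // x /I0 ->.
  by case: pP => [[]].
exists (S_torsion T); split; first exact/wide_thick/serre_wide/serre_S_torsion.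
have nR : ~ S_torsion T (R^o).
  move=> [_ [t _]]; have [r [r0 hr]] := t 1.
  by move: r0; rewrite -[r]mulr1 [r * 1]hr eqxx.
move=> P pP; split=> [[_ [//|[p [pp [hp Cp]]]]]|TP].
  have [P' [TP' hP']] := (S_torsion_cyc_prime hR T pp).1 Cp.
  by have -> : P = P' by apply/predeqP => x; rewrite hp hP'.
split=> //; right.
case: (prime_idealP hR pP) => [hz|[p [pp hp]]].
  have e : P = (fun x => x = 0) by apply/predeqP.
  by rewrite e in TP.
exists p; do 2!split=> //; apply/(S_torsion_cyc_prime hR T pp).
by exists P.
Qed.

End SpecCorrespondence.

Theorem mainTheorem4 (R : idomainType) (hR : is_PID R) :
  (forall C : subcat R,
     (thick C <-> wide C) /\ (wide C <-> serre C) /\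
     (thick C <->
        (same_subcat C (@fgA R) \/
         exists S : (R -> Prop) -> Prop,
           (forall P, S P -> is_maximal_ideal P) /\ same_subcat C (S_torsion S)))) /\
  (exists F : subcat R -> ((R -> Prop) -> Prop),
     (forall C D, thick C -> thick D -> same_subcat C D -> same_specset (F C) (F D)) /\
     (forall C, thick C -> spec_closed (F C)) /\
     (forall C D, thick C -> thick D -> same_specset (F C) (F D) -> same_subcat C D) /\
     (forall T, spec_closed T -> exists C, thick C /\ same_specset (F C) T)).
Proof.
split=> [C|].
  split; first exact: thick_iff_wide.
  by split; [exact: wide_iff_serre|exact: thick_iff_fgA_or_S_torsion].
exists (@spec_of R); split; first by move=> C D _ _; apply: spec_of_ext.
split; first by move=> C _; apply: spec_of_closed.
split; first exact: spec_of_inj.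
exact: spec_of_surj.
Qed.
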